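(* Let $N\ge3$ and $m>2-\frac2N$. For every $M>0$ there exists a unique $\alpha=\alpha(M)>0$ such that the Lane–Emden solution $\psi$ with $\psi(0)=\alpha$ satisfies $$\omega_{N-1}\int_0^{R_*(\alpha)}\psi^{\frac{1}{m-1}}(s)\,s^{N-1}\,ds=M.$$
   Context: $\omega_{N-1}$ is the area of the unit sphere $S^{N-1}\subset\mathbb{R}^N$. For $\alpha>0$, $\psi$ denotes the unique solution of $\psi''+\frac{N-1}{r}\psi'=-\frac{m-1}{m}\psi^{1/(m-1)}$, $\psi(0)=\alpha$, $\psi'(0)=0$, positive and decreasing on $(0,R_*(\alpha))$, where $R_*(\alpha)\in(0,\infty)$ is the first zero of $\psi$ (the maximal radius on which the positive solution exists). *)

From Stdlib Require Import Reals Lra.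
Open Scope R_scope.

(* Real power with the convention x^y = 0 for x <= 0 (only used for y > 0);
   Stdlib's Rpower 0 y would be 1. *)
Definition rpow (x y : R) : R := if Rlt_dec 0 x then Rpower x y else 0.

(* sphere_area N = area of the unit sphere S^(N-1) in R^N,
   i.e. 2 pi^(N/2) / Gamma(N/2):  A(1)=2, A(2)=2pi, A(N+2) = 2pi/N * A(N). *)
Fixpoint sphere_area (N : nat) : R :=
  match N with
  | O => 0
  | S O => 2
  | S (S O) => 2 * PI
  | S (S k as N') => 2 * PI / INR k * sphere_area k
  end.

Definition lane_emden_sol (N : nat) (m alpha : R) (psi : R -> R) (Rs : R) : Prop :=
  0 < Rs /\
  psi 0 = alpha /\
  (* psi'(0) = 0 (one-sided derivative at 0, implies right-continuity) *)
  (forall eps, 0 < eps -> exists delta, 0 < delta /\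
      forall r, 0 < r < delta -> Rabs ((psi r - alpha) / r) < eps) /\
  psi Rs = 0 /\
  (forall eps, 0 < eps -> exists delta, 0 < delta /\
      forall r, Rs - delta < r < Rs -> Rabs (psi r - psi Rs) < eps) /\
  (forall r, 0 <= r < Rs -> 0 < psi r) /\
  (forall r1 r2, 0 < r1 -> r1 < r2 -> r2 < Rs -> psi r2 < psi r1) /\
  exists dpsi ddpsi : R -> R,
    forall r, 0 < r < Rs ->
      derivable_pt_lim psi r (dpsi r) /\
      derivable_pt_lim dpsi r (ddpsi r) /\
      ddpsi r + (INR N - 1) / r * dpsi r = - ((m - 1) / m) * rpow (psi r) (1 / (m - 1)).

Definition mass_integrand (N : nat) (m : R) (psi : R -> R) (s : R) : R :=
  rpow (psi s) (1 / (m - 1)) * s ^ (N - 1).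

From Stdlib Require Import Reals Lra Lia Classical IndefiniteDescription ZArith.
From Coquelicot Require Import Coquelicot.
Open Scope R_scope.

(* Write p = 1/(m-1).  If phi solves the problem with phi(0) = 1 and first zero R, then
   r |-> a phi(a^((p-1)/2) r) solves it with initial value a and first zero R a^((1-p)/2), and its
   mass is a^e times that of phi, where e = p - N(p-1)/2 is positive exactly because m > 2 - 2/N.
   The solution with a given initial value is unique (a Gronwall estimate for the radial equation,
   valid while both solutions stay away from 0), so the mass is the bijection a |-> a^e M(1) of
   (0, +oo) and everything reduces to existence for a = 1.  That solution is the limit of the
   solutions of the problem with u^p truncated below at a level dl, obtained by Picard iteration of
   the integral equation: each agrees with the true solution until it reaches dl, and the radii
   where this happens stay bounded as dl -> 0 because p < N/(N-2). *)

Definition vanishes_at_0 (h : R -> R) : Prop :=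
  forall eps, 0 < eps -> exists d, 0 < d /\ forall t, 0 < t < d -> Rabs (h t) < eps.

Lemma vanishes_at_0_le (h g : R -> R) :
  (forall t, 0 < t -> Rabs (h t) <= Rabs (g t)) -> vanishes_at_0 g -> vanishes_at_0 h.
Proof.
  intros Hle Hg eps He. destruct (Hg eps He) as [d [Hd H]]. exists d. split; auto.
  intros t Ht. eapply Rle_lt_trans; [apply Hle; lra|]. auto.
Qed.

Lemma vanishes_at_0_opp (h : R -> R) : vanishes_at_0 h -> vanishes_at_0 (fun t => - h t).
Proof. apply vanishes_at_0_le. intros t _. rewrite Rabs_Ropp. lra. Qed.

Lemma vanishes_at_0_minus (f g : R -> R) :
  vanishes_at_0 f -> vanishes_at_0 g -> vanishes_at_0 (fun t => f t - g t).
Proof.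
  intros Hf Hg eps He.
  destruct (Hf (eps / 2)) as [d1 [Hd1 H1]]; [lra|].
  destruct (Hg (eps / 2)) as [d2 [Hd2 H2]]; [lra|].
  exists (Rmin d1 d2). split; [apply Rmin_pos; lra|].
  intros t Ht. pose proof (Rmin_l d1 d2). pose proof (Rmin_r d1 d2).
  specialize (H1 t ltac:(lra)). specialize (H2 t ltac:(lra)).
  eapply Rle_lt_trans; [apply Rabs_triang|]. rewrite Rabs_Ropp. lra.
Qed.

Lemma vanishes_at_0_monomial (C : R) (k : nat) :
  (1 <= k)%nat -> vanishes_at_0 (fun t => C * t ^ k).
Proof.
  intros Hk eps He.
  pose proof (Rabs_pos C).
  set (d := Rmin 1 (eps / (Rabs C + 1))).
  assert (Hd : 0 < d) by (apply Rmin_pos; [lra|apply Rdiv_lt_0_compat; lra]).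
  exists d. split; [exact Hd|]. intros t Ht.
  assert (d <= 1) by apply Rmin_l. assert (d <= eps / (Rabs C + 1)) by apply Rmin_r.
  assert (Htk : 0 <= t ^ k <= t).
  { split; [apply pow_le; lra|]. destruct k as [|k]; [lia|]. change (t ^ S k) with (t * t ^ k).
    apply Rle_trans with (t * 1); [apply Rmult_le_compat_l; [lra|]|lra].
    rewrite <- (pow1 k). apply pow_incr; lra. }
  rewrite Rabs_mult, (Rabs_right (t ^ k)) by lra.
  apply Rle_lt_trans with ((Rabs C + 1) * t); [apply Rmult_le_compat; lra|].
  apply Rlt_le_trans with ((Rabs C + 1) * (eps / (Rabs C + 1))); [apply Rmult_lt_compat_l; lra|].
  right. field. lra.
Qed.

Lemma nonincreasing_of_deriv_nonpos (h h' : R -> R) (a b : R) :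
  (forall x, a < x < b -> derivable_pt_lim h x (h' x)) ->
  (forall x, a < x < b -> h' x <= 0) ->
  forall s t, a < s -> s <= t -> t < b -> h t <= h s.
Proof.
  intros Hd Hn s t Ha Hst Hb.
  destruct (Req_dec s t) as [->|Hne]; [lra|].
  destruct (MVT_cor2 h h' s t) as [x [Hx1 Hx2]]; [lra| |].
  - intros x Hx. apply Hd. lra.
  - assert (h' x * (t - s) <= 0) by (apply Rmult_le_0_r; [apply Hn|]; lra). lra.
Qed.

Lemma nondecreasing_of_deriv_nonneg (h h' : R -> R) (a b : R) :
  (forall x, a < x < b -> derivable_pt_lim h x (h' x)) ->
  (forall x, a < x < b -> 0 <= h' x) ->
  forall s t, a < s -> s <= t -> t < b -> h s <= h t.
Proof.
  intros Hd Hn s t Ha Hst Hb.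
  enough (- h t <= - h s) by lra.
  apply (nonincreasing_of_deriv_nonpos (fun x => - h x) (fun x => - h' x) a b); auto.
  - intros x Hx. apply derivable_pt_lim_opp. auto.
  - intros x Hx. specialize (Hn x Hx). lra.
Qed.

Lemma nonpos_of_vanishing_nonincreasing (h : R -> R) (r : R) :
  0 < r -> (forall t, 0 < t < r -> h r <= h t) -> vanishes_at_0 h -> h r <= 0.
Proof.
  intros Hr Hm Hv. apply Rnot_lt_le. intros Hpos.
  destruct (Hv (h r) Hpos) as [d [Hd Ht]].
  set (t := Rmin d r / 2).
  assert (0 < Rmin d r) by (apply Rmin_pos; lra).
  pose proof (Rmin_l d r). pose proof (Rmin_r d r).
  specialize (Ht t ltac:(unfold t; lra)). specialize (Hm t ltac:(unfold t; lra)).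
  apply Rabs_def2 in Ht. lra.
Qed.

Lemma le_of_vanishing_deriv_le (h h' : R -> R) (b K : R) (j : nat) :
  (forall t, 0 < t < b -> derivable_pt_lim h t (h' t)) ->
  (forall t, 0 < t < b -> h' t <= K * t ^ j) ->
  vanishes_at_0 h -> forall r, 0 < r < b -> h r <= K * r ^ S j / INR (S j).
Proof.
  intros Hd Hb Hv r Hr.
  assert (HS : 0 < INR (S j)) by (apply lt_0_INR; lia).
  set (g := fun t => h t - K / INR (S j) * t ^ S j).
  enough (g r <= 0) by (unfold g, Rdiv in *; lra).
  apply nonpos_of_vanishing_nonincreasing; [lra| |].
  - intros t Ht. apply (nonincreasing_of_deriv_nonpos g (fun t => h' t - K * t ^ j) 0 b); try lra.
    + intros x Hx. apply derivable_pt_lim_minus; [auto|].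
      replace (K * x ^ j) with (K / INR (S j) * (INR (S j) * x ^ pred (S j))) by (simpl pred; field; lra).
      apply derivable_pt_lim_scal, derivable_pt_lim_pow.
    + intros x Hx. specialize (Hb x Hx). lra.
  - apply vanishes_at_0_minus; [auto|]. apply vanishes_at_0_monomial. lia.
Qed.

Lemma abs_le_of_vanishing_deriv_bound (h h' : R -> R) (b K : R) (j : nat) :
  (forall t, 0 < t < b -> derivable_pt_lim h t (h' t)) ->
  (forall t, 0 < t < b -> Rabs (h' t) <= K * t ^ j) ->
  vanishes_at_0 h -> forall r, 0 < r < b -> Rabs (h r) <= K * r ^ S j / INR (S j).
Proof.
  intros Hd Hb Hv r Hr. apply Rabs_le. split.
  - enough (- h r <= K * r ^ S j / INR (S j)) by lra.
    apply (le_of_vanishing_deriv_le (fun t => - h t) (fun t => - h' t) b); auto.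
    + intros t Ht. apply derivable_pt_lim_opp. auto.
    + intros t Ht. specialize (Hb t Ht). apply Rabs_le_between in Hb. lra.
    + apply vanishes_at_0_opp. auto.
  - apply (le_of_vanishing_deriv_le h h' b); auto.
    intros t Ht. specialize (Hb t Ht). apply Rabs_le_between in Hb. lra.
Qed.

Lemma eq_0_of_abs_le_lim (x : R) (u : nat -> R) :
  is_lim_seq u 0 -> (forall n, Rabs x <= u n) -> x = 0.
Proof.
  intros Hu Hx.
  assert (H : Rbar_le (Rabs x) 0)
    by (apply (is_lim_seq_le (fun _ => Rabs x) u); auto; apply is_lim_seq_const).
  simpl in H. destruct (Req_dec x 0) as [|Hne]; auto. pose proof (Rabs_pos_lt x Hne). lra.
Qed.

Lemma is_lim_seq_half_pow (B : R) : is_lim_seq (fun n => B / 2 ^ n) 0.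
Proof.
  apply (is_lim_seq_ext (fun n => B * (/ 2) ^ n)).
  - intros n. rewrite pow_inv. reflexivity.
  - replace (Finite 0) with (Rbar_mult B 0) by (simpl; f_equal; ring).
    apply is_lim_seq_scal_l, is_lim_seq_geom. rewrite Rabs_right; lra.
Qed.

Lemma half_pow_small (B eps : R) : 0 < eps -> exists n, B / 2 ^ n < eps.
Proof.
  intros He. destruct (proj2 (is_lim_seq_spec _ _) (is_lim_seq_half_pow B) (mkposreal eps He)) as [n Hn].
  exists n. specialize (Hn n (le_n _)). simpl in Hn. rewrite Rminus_0_r in Hn.
  eapply Rle_lt_trans; [apply Rle_abs|exact Hn].
Qed.

(** * Uniqueness for the radial equation *)

Definition solves_radial_ode (N : nat) (c b : R) (u d dd G : R -> R) : Prop :=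
  forall r, 0 < r < b ->
    derivable_pt_lim u r (d r) /\ derivable_pt_lim d r (dd r) /\
    dd r + (INR N - 1) / r * d r = - c * G r.

Definition radial_flux (N : nat) (d : R -> R) (r : R) : R := r ^ (N - 1) * d r.

Lemma radial_flux_deriv (N : nat) (d dd F : R -> R) (r : R) :
  (1 <= N)%nat -> 0 < r -> derivable_pt_lim d r (dd r) ->
  dd r + (INR N - 1) / r * d r = F r ->
  derivable_pt_lim (radial_flux N d) r (r ^ (N - 1) * F r).
Proof.
  intros HN Hr Hd HF.
  replace (r ^ (N - 1) * F r) with (INR (N - 1) * r ^ pred (N - 1) * d r + r ^ (N - 1) * dd r).
  - apply (derivable_pt_lim_mult (fun t => t ^ (N - 1)) d); [apply derivable_pt_lim_pow|exact Hd].
  - rewrite <- HF. destruct N as [|[|k]]; [lia| |].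
    + replace (INR 1) with 1 by reflexivity. simpl. field. lra.
    + replace (S (S k) - 1)%nat with (S k) by lia. simpl pred.
      rewrite (S_INR (S k)). change (r ^ S k) with (r * r ^ k). field. lra.
Qed.

Section RadialGronwall.

Variables (N : nat) (c L b B0 : R) (u1 u2 d1 d2 dd1 dd2 G1 G2 : R -> R).
Hypothesis HN : (1 <= N)%nat.
Hypothesis Hc : 0 <= c.
Hypothesis HL : 0 <= L.
Hypothesis HB0 : 0 <= B0.
Hypothesis ode1 : solves_radial_ode N c b u1 d1 dd1 G1.
Hypothesis ode2 : solves_radial_ode N c b u2 d2 dd2 G2.
Hypothesis G_lipschitz : forall r, 0 < r < b -> Rabs (G1 r - G2 r) <= L * Rabs (u1 r - u2 r).
Hypothesis gap_bounded : forall r, 0 < r < b -> Rabs (u1 r - u2 r) <= B0.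
Hypothesis gap_vanishes : vanishes_at_0 (fun r => u1 r - u2 r).
Hypothesis flux_gap_vanishes : vanishes_at_0 (radial_flux N (fun r => d1 r - d2 r)).

Let gap_deriv r : 0 < r < b -> derivable_pt_lim (fun t => u1 t - u2 t) r (d1 r - d2 r).
Proof.
  intros Hr. apply derivable_pt_lim_minus; [apply (ode1 r Hr)|apply (ode2 r Hr)].
Qed.

Let flux_gap_deriv r : 0 < r < b ->
  derivable_pt_lim (radial_flux N (fun t => d1 t - d2 t)) r (r ^ (N - 1) * (- c * (G1 r - G2 r))).
Proof.
  intros Hr. destruct (ode1 r Hr) as [_ [D1 E1]]. destruct (ode2 r Hr) as [_ [D2 E2]].
  apply (radial_flux_deriv N (fun t => d1 t - d2 t) (fun t => dd1 t - dd2 t)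
           (fun t => - c * (G1 t - G2 t))); auto; [lra| |].
  - apply derivable_pt_lim_minus; auto.
  - replace (dd1 r - dd2 r + (INR N - 1) / r * (d1 r - d2 r))
      with ((dd1 r + (INR N - 1) / r * d1 r) - (dd2 r + (INR N - 1) / r * d2 r)) by ring.
    rewrite E1, E2. ring.
Qed.

Lemma radial_gap_step (n : nat) (B : R) : 0 <= B ->
  (forall t, 0 < t < b -> Rabs (u1 t - u2 t) <= B * t ^ (2 * n)) ->
  forall r, 0 < r < b -> Rabs (u1 r - u2 r) <= c * L * B * r ^ (2 * n + 2) / INR (S n).
Proof.
  intros HB Hgap r Hr.
  set (K := c * L * B).
  assert (HK : 0 <= K) by (unfold K; repeat apply Rmult_le_pos; auto).
  assert (Hflux : forall t, 0 < t < b ->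
    Rabs (radial_flux N (fun t => d1 t - d2 t) t) <= K * t ^ S (N - 1 + 2 * n) / INR (S (N - 1 + 2 * n))).
  { apply (abs_le_of_vanishing_deriv_bound _ (fun t => t ^ (N - 1) * (- c * (G1 t - G2 t))) b);
      auto.
    intros t Ht. assert (0 < t ^ (N - 1)) by (apply pow_lt; lra).
    rewrite pow_add, Rabs_mult, Rabs_mult, Rabs_Ropp, (Rabs_right c), (Rabs_right (t ^ (N - 1))) by lra.
    assert (Rabs (G1 t - G2 t) <= L * (B * t ^ (2 * n))).
    { eapply Rle_trans; [apply G_lipschitz; auto|]. apply Rmult_le_compat_l; auto. }
    unfold K. replace (c * L * B * (t ^ (N - 1) * t ^ (2 * n)))
      with (t ^ (N - 1) * c * (L * (B * t ^ (2 * n)))) by ring.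
    rewrite <- Rmult_assoc. apply Rmult_le_compat_l; [apply Rmult_le_pos; lra|auto]. }
  assert (Hd : forall t, 0 < t < b -> Rabs (d1 t - d2 t) <= K * t ^ (2 * n + 1)).
  { intros t Ht. specialize (Hflux t Ht).
    assert (Hp : 0 < t ^ (N - 1)) by (apply pow_lt; lra).
    assert (HI : 1 <= INR (S (N - 1 + 2 * n))) by (rewrite <- INR_1; apply le_INR; lia).
    assert (0 <= t ^ (2 * n + 1)) by (apply pow_le; lra).
    replace (t ^ S (N - 1 + 2 * n)) with (t ^ (N - 1) * t ^ (2 * n + 1)) in Hflux
      by (rewrite <- pow_add; f_equal; lia).
    unfold radial_flux in Hflux. rewrite Rabs_mult, (Rabs_right (t ^ (N - 1))) in Hflux by lra.
    apply (Rmult_le_reg_l (t ^ (N - 1))); auto.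
    eapply Rle_trans; [apply Hflux|].
    replace (K * (t ^ (N - 1) * t ^ (2 * n + 1)) / INR (S (N - 1 + 2 * n)))
      with (t ^ (N - 1) * (K * t ^ (2 * n + 1)) * / INR (S (N - 1 + 2 * n))) by (field; lra).
    rewrite <- (Rmult_1_r (t ^ (N - 1) * (K * t ^ (2 * n + 1)))) at 2.
    apply Rmult_le_compat_l; [apply Rmult_le_pos; [lra|apply Rmult_le_pos; lra]|].
    rewrite <- Rinv_1. apply Rinv_le_contravar; lra. }
  eapply Rle_trans;
    [apply (abs_le_of_vanishing_deriv_bound _ _ b K (2 * n + 1) gap_deriv Hd gap_vanishes r Hr)|].
  replace (S (2 * n + 1)) with (2 * n + 2)%nat by lia.
  unfold Rdiv. apply Rmult_le_compat_l; [apply Rmult_le_pos; [auto|apply pow_le; lra]|].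
  apply Rinv_le_contravar; [apply lt_0_INR; lia|apply le_INR; lia].
Qed.

Lemma radial_gap_bound (n : nat) : forall r, 0 < r < b ->
  Rabs (u1 r - u2 r) <= B0 * (c * L) ^ n / INR (fact n) * r ^ (2 * n).
Proof.
  induction n as [|n IH]; intros r Hr.
  - simpl. replace (B0 * 1 / 1 * 1) with B0 by field. auto.
  - assert (Hf : 0 < INR (fact n)) by (apply lt_0_INR, lt_O_fact).
    assert (HB : 0 <= B0 * (c * L) ^ n / INR (fact n)).
    { apply Rdiv_le_0_compat; [apply Rmult_le_pos; [auto|apply pow_le, Rmult_le_pos; auto]|auto]. }
    eapply Rle_trans; [apply (radial_gap_step n _ HB IH r Hr)|].
    right. replace (2 * S n)%nat with (2 * n + 2)%nat by lia.
    rewrite fact_simpl, mult_INR. simpl pow. field.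
    split; [lra|apply not_0_INR; lia].
Qed.

Lemma radial_solutions_agree : forall r, 0 < r < b -> u1 r = u2 r.
Proof.
  intros r Hr. apply Rminus_diag_uniq.
  apply (eq_0_of_abs_le_lim _ (fun n => B0 * ((c * L * r ^ 2) ^ n / INR (fact n)))).
  - replace (Finite 0) with (Rbar_mult B0 0) by (simpl; f_equal; ring).
    apply is_lim_seq_scal_l, is_lim_seq_Reals, cv_speed_pow_fact.
  - intros n. eapply Rle_trans; [apply (radial_gap_bound n); auto|]. right.
    rewrite !Rpow_mult_distr, pow_mult. field. apply not_0_INR, fact_neq_0.
Qed.

End RadialGronwall.

Lemma Rpower_gt_0 (x p : R) : 0 < Rpower x p.
Proof. apply exp_pos. Qed.

Lemma Rpower_1_l (p : R) : Rpower 1 p = 1.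
Proof. unfold Rpower. rewrite ln_1, Rmult_0_r. apply exp_0. Qed.

Lemma Rpower_inv_exponent (x e : R) : 0 < x -> 0 < e -> Rpower (Rpower x e) (1 / e) = x.
Proof.
  intros Hx He. rewrite Rpower_mult. replace (e * (1 / e)) with 1 by (field; lra).
  apply Rpower_1; auto.
Qed.

Lemma Rpower_le_exponent_anti (x p q : R) : 0 < x <= 1 -> p <= q -> Rpower x q <= Rpower x p.
Proof.
  intros Hx Hpq. unfold Rpower.
  assert (ln x <= 0).
  { destruct (Req_dec x 1) as [->|]; [rewrite ln_1; lra|].
    rewrite <- ln_1. left. apply ln_increasing; lra. }
  assert (Hle : q * ln x <= p * ln x) by nra.
  destruct Hle as [Hlt|Heq]; [left; apply exp_increasing; auto|rewrite Heq; lra].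
Qed.

Lemma Rpower_le_base_anti (x y e : R) : 0 < x <= y -> e <= 0 -> Rpower y e <= Rpower x e.
Proof.
  intros Hxy He. replace e with (- - e) by ring. rewrite (Rpower_Ropp y (- e)), (Rpower_Ropp x (- e)).
  apply Rinv_le_contravar; [apply Rpower_gt_0|]. apply Rle_Rpower_l; lra.
Qed.

Lemma Rpower_le_endpoints (z e d A : R) : 0 < d -> d <= z <= A ->
  Rpower z e <= Rpower d e + Rpower A e.
Proof.
  intros Hd Hz. pose proof (Rpower_gt_0 d e). pose proof (Rpower_gt_0 A e).
  destruct (Rle_dec 0 e).
  - assert (Rpower z e <= Rpower A e) by (apply Rle_Rpower_l; lra). lra.
  - assert (Rpower z e <= Rpower d e) by (apply Rpower_le_base_anti; lra). lra.
Qed.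

Lemma Rpower_lipschitz (p d A x y : R) : 0 < p -> 0 < d -> d <= x <= A -> d <= y <= A ->
  Rabs (Rpower x p - Rpower y p) <= p * (Rpower d (p - 1) + Rpower A (p - 1)) * Rabs (x - y).
Proof.
  intros Hp Hd.
  assert (Hlt : forall a b, d <= a <= A -> d <= b <= A -> a < b ->
    Rabs (Rpower a p - Rpower b p) <= p * (Rpower d (p - 1) + Rpower A (p - 1)) * Rabs (a - b)).
  { intros a b Ha Hb Hab.
    destruct (MVT_cor2 (fun x => Rpower x p) (fun x => p * Rpower x (p - 1)) a b) as [z [Hz1 Hz2]];
      auto.
    { intros z Hz. apply derivable_pt_lim_power. lra. }
    rewrite Rabs_minus_sym, Hz1, Rabs_mult, (Rabs_minus_sym b a).
    apply Rmult_le_compat_r; [apply Rabs_pos|].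
    pose proof (Rpower_gt_0 z (p - 1)).
    rewrite Rabs_right by (apply Rle_ge, Rmult_le_pos; lra).
    apply Rmult_le_compat_l; [lra|]. apply Rpower_le_endpoints; lra. }
  intros Hx Hy. destruct (Rtotal_order x y) as [H|[H|H]].
  - auto.
  - subst. rewrite !Rminus_diag, Rabs_R0. lra.
  - rewrite Rabs_minus_sym, (Rabs_minus_sym x). auto.
Qed.

Lemma rpow_of_pos (x p : R) : 0 < x -> rpow x p = Rpower x p.
Proof. intros H. unfold rpow. destruct (Rlt_dec 0 x); [auto|lra]. Qed.

Lemma rpow_of_nonpos (x p : R) : x <= 0 -> rpow x p = 0.
Proof. intros H. unfold rpow. destruct (Rlt_dec 0 x); [lra|auto]. Qed.

Lemma rpow_ge_0 (x p : R) : 0 <= rpow x p.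
Proof. unfold rpow. destruct (Rlt_dec 0 x); [left; apply Rpower_gt_0|lra]. Qed.

Lemma rpow_mult_l (a y p : R) : 0 < a -> rpow (a * y) p = Rpower a p * rpow y p.
Proof.
  intros Ha. destruct (Rlt_dec 0 y) as [Hy|Hy].
  - rewrite !rpow_of_pos by (try apply Rmult_lt_0_compat; lra). rewrite Rpower_mult_distr; auto.
  - rewrite !rpow_of_nonpos; [ring|lra|]. assert (a * y <= 0) by (apply Rmult_le_0_l; lra). lra.
Qed.

(** * Lane-Emden solutions with the same initial value coincide *)

Lemma deriv_le_of_flux_le (N : nat) (d : R -> R) (eps s : R) :
  (3 <= N)%nat -> 0 < eps -> 0 < s <= 1 -> radial_flux N d s <= - eps -> d s + eps / s ^ 2 <= 0.
Proof.
  intros HN He Hs Hflux. unfold radial_flux in Hflux.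
  assert (0 < s ^ (N - 1)) by (apply pow_lt; lra).
  assert (Hs2 : 0 < s ^ 2) by (apply pow_lt; lra).
  assert (Hpow : s ^ (N - 1) <= s ^ 2).
  { replace (s ^ (N - 1)) with (s ^ 2 * s ^ (N - 3)) by (rewrite <- pow_add; f_equal; lia).
    assert (s ^ (N - 3) <= 1) by (rewrite <- (pow1 (N - 3)); apply pow_incr; lra). nra. }
  assert (d s < 0) by nra.
  replace (d s + eps / s ^ 2) with ((s ^ 2 * d s + eps) / s ^ 2) by (field; lra).
  apply Rmult_le_0_r; [nra|]. left. apply Rinv_0_lt_compat. lra.
Qed.

Lemma unbounded_of_deriv_le_neg_inv_sq (u d : R -> R) (q eps K : R) : 0 < q -> 0 < eps ->
  (forall s, 0 < s < q -> derivable_pt_lim u s (d s)) ->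
  (forall s, 0 < s < q -> d s + eps / s ^ 2 <= 0) ->
  ~ (forall s, 0 < s < q -> 0 < u s <= K).
Proof.
  intros Hq He Hd Hslope Hb.
  set (r := q / 2).
  assert (Hmono : forall s, 0 < s <= r -> u r - eps / r <= u s - eps / s).
  { intros s Hs.
    apply (nonincreasing_of_deriv_nonpos (fun s => u s - eps / s) (fun s => d s + eps / s ^ 2) 0 q);
      try (unfold r in *; lra); auto.
    intros x Hx. replace (d x + eps / x ^ 2) with (d x - - (eps / x ^ 2)) by ring.
    apply (derivable_pt_lim_minus u (fun s => eps / s)); [apply Hd; lra|].
    apply is_derive_Reals. auto_derive; [lra|]. field. lra. }
  assert (Hur : 0 < u r) by (apply Hb; unfold r; lra).
  assert (0 < eps / r) by (apply Rdiv_lt_0_compat; unfold r; lra).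
  set (Q := K + eps / r + 1).
  assert (HQ : 0 < Q) by (unfold Q; destruct (Hb r ltac:(unfold r; lra)); lra).
  set (s := Rmin (r / 2) (eps / Q)).
  assert (Hs0 : 0 < s) by (unfold s; apply Rmin_pos; [unfold r; lra|apply Rdiv_lt_0_compat; lra]).
  assert (Hs1 : s <= r / 2) by apply Rmin_l. assert (Hs2 : s <= eps / Q) by apply Rmin_r.
  assert (Hes : Q <= eps / s).
  { apply (Rmult_le_reg_r s); auto. unfold Rdiv. rewrite Rmult_assoc, Rinv_l by lra.
    apply (Rmult_le_reg_r (/ Q)); [apply Rinv_0_lt_compat; lra|].
    replace (Q * s * / Q) with s by (field; lra). lra. }
  specialize (Hmono s ltac:(unfold r in *; lra)).
  destruct (Hb s ltac:(unfold r in *; lra)). unfold Q in Hes. lra.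
Qed.

Section FluxAtZero.

Variables (N : nat) (c b K : R) (u d dd G : R -> R).
Hypothesis HN : (3 <= N)%nat.
Hypothesis Hc : 0 <= c.
Hypothesis Hb : 0 < b.
Hypothesis ode : solves_radial_ode N c b u d dd G.
Hypothesis G_nonneg : forall r, 0 < r < b -> 0 <= G r.
Hypothesis u_bounds : forall r, 0 < r < b -> 0 < u r <= K.
Hypothesis u_decr : forall r1 r2, 0 < r1 -> r1 < r2 -> r2 < b -> u r2 < u r1.

Let flux_nonincreasing :
  forall s t, 0 < s -> s <= t -> t < b -> radial_flux N d t <= radial_flux N d s.
Proof.
  apply (nonincreasing_of_deriv_nonpos _ (fun t => t ^ (N - 1) * (- c * G t))).
  - intros t Ht. destruct (ode t Ht) as [_ [D E]].
    apply (radial_flux_deriv N d dd (fun t => - c * G t)); auto; [lia|lra].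
  - intros t Ht. assert (0 < t ^ (N - 1)) by (apply pow_lt; lra).
    specialize (G_nonneg t Ht). assert (0 <= c * G t) by (apply Rmult_le_pos; lra). nra.
Qed.

Let flux_nonpos : forall t, 0 < t < b -> radial_flux N d t <= 0.
Proof.
  intros t0 Ht0. apply Rnot_lt_le. intros Hpos.
  assert (Hd : forall x, 0 < x < t0 -> 0 <= d x).
  { intros x Hx. assert (radial_flux N d t0 <= radial_flux N d x) by (apply flux_nonincreasing; lra).
    unfold radial_flux in *. assert (0 < x ^ (N - 1)) by (apply pow_lt; lra). nra. }
  assert (u (t0 / 4) <= u (t0 / 2)).
  { apply (nondecreasing_of_deriv_nonneg u d 0 t0); try lra; [|auto].
    intros x Hx. apply (ode x). lra. }
  assert (u (t0 / 2) < u (t0 / 4)) by (apply u_decr; lra). lra.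
Qed.

Let flux_not_bounded_away :
  ~ exists eps, 0 < eps /\ forall s, 0 < s < b -> radial_flux N d s <= - eps.
Proof.
  intros [eps [He Hall]].
  set (q := Rmin b 1).
  assert (Hq : 0 < q) by (unfold q; apply Rmin_pos; lra).
  assert (q <= b) by apply Rmin_l. assert (q <= 1) by apply Rmin_r.
  apply (unbounded_of_deriv_le_neg_inv_sq u d q eps K); auto.
  - intros s Hs. apply (ode s). lra.
  - intros s Hs. apply (deriv_le_of_flux_le N); auto; [lra|]. apply Hall. lra.
  - intros s Hs. apply u_bounds. lra.
Qed.

Lemma radial_flux_vanishes_at_0 : vanishes_at_0 (radial_flux N d).
Proof.
  intros eps He.
  assert (exists s, 0 < s < b /\ - eps < radial_flux N d s) as [s0 [Hs0 Hgs0]].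
  { apply NNPP. intros Hn. apply flux_not_bounded_away. exists eps. split; auto.
    intros s Hs. apply Rnot_lt_le. intros Hlt. apply Hn. exists s. auto. }
  exists s0. split; [lra|]. intros t Ht.
  assert (radial_flux N d s0 <= radial_flux N d t) by (apply flux_nonincreasing; lra).
  assert (radial_flux N d t <= 0) by (apply flux_nonpos; lra).
  rewrite Rabs_left1 by lra. lra.
Qed.

End FluxAtZero.

Section LaneEmdenUniqueness.

Variables (N : nat) (m : R).
Hypothesis HN : (3 <= N)%nat.
Hypothesis Hm : 1 < m.

Lemma lane_emden_sol_vanishes (a : R) (psi : R -> R) (Rs : R) :
  lane_emden_sol N m a psi Rs -> vanishes_at_0 (fun r => psi r - a).
Proof.
  intros [_ [_ [Hd0 _]]] eps He. destruct (Hd0 1 ltac:(lra)) as [d [Hd Hq]].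
  exists (Rmin d eps). split; [apply Rmin_pos; lra|]. intros t Ht.
  pose proof (Rmin_l d eps). pose proof (Rmin_r d eps).
  specialize (Hq t ltac:(lra)).
  replace (psi t - a) with ((psi t - a) / t * t) by (field; lra).
  rewrite Rabs_mult, (Rabs_right t) by lra.
  apply Rlt_le_trans with (1 * t); [apply Rmult_lt_compat_r|]; lra.
Qed.

Lemma lane_emden_sol_le_init (a : R) (psi : R -> R) (Rs : R) :
  lane_emden_sol N m a psi Rs -> forall r, 0 < r < Rs -> 0 < psi r <= a.
Proof.
  intros S r Hr. pose proof (lane_emden_sol_vanishes a psi Rs S) as Hv.
  destruct S as [_ [_ [_ [_ [_ [Hpos [Hdec _]]]]]]].
  split; [apply Hpos; lra|]. apply Rnot_lt_le. intros Hc.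
  destruct (Hv (psi r - a) ltac:(lra)) as [d [Hd Hq]].
  set (s := Rmin d r / 2).
  assert (0 < Rmin d r) by (apply Rmin_pos; lra).
  pose proof (Rmin_l d r). pose proof (Rmin_r d r).
  specialize (Hq s ltac:(unfold s; lra)).
  assert (psi r < psi s) by (apply Hdec; unfold s; lra).
  apply Rabs_lt_between in Hq. lra.
Qed.

Lemma lane_emden_sol_flux (a : R) (psi : R -> R) (Rs : R) :
  lane_emden_sol N m a psi Rs ->
  exists dpsi ddpsi : R -> R,
    solves_radial_ode N ((m - 1) / m) Rs psi dpsi ddpsi (fun r => rpow (psi r) (1 / (m - 1))) /\
    vanishes_at_0 (radial_flux N dpsi).
Proof.
  intros S. pose proof (lane_emden_sol_le_init a psi Rs S) as Hle.
  destruct S as [HRs [_ [_ [_ [_ [_ [Hdec [dpsi [ddpsi Hode]]]]]]]]].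
  exists dpsi, ddpsi. split; [exact Hode|].
  apply (radial_flux_vanishes_at_0 N ((m - 1) / m) Rs a psi dpsi ddpsi
           (fun r => rpow (psi r) (1 / (m - 1))));
    auto.
  - apply Rlt_le, Rdiv_lt_0_compat; lra.
  - intros r _. apply rpow_ge_0.
Qed.

Lemma lane_emden_sol_agree_above (a : R) (psi1 psi2 : R -> R) (R1 R2 b dl : R) :
  lane_emden_sol N m a psi1 R1 -> lane_emden_sol N m a psi2 R2 -> b <= R1 -> b <= R2 -> 0 < dl ->
  (forall t, 0 < t < b -> dl <= psi1 t /\ dl <= psi2 t) ->
  forall r, 0 < r < b -> psi1 r = psi2 r.
Proof.
  intros S1 S2 Hb1 Hb2 Hdl Hlow.
  pose proof (lane_emden_sol_le_init a psi1 R1 S1) as B1.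
  pose proof (lane_emden_sol_le_init a psi2 R2 S2) as B2.
  destruct (lane_emden_sol_flux a psi1 R1 S1) as [d1 [dd1 [O1 W1]]].
  destruct (lane_emden_sol_flux a psi2 R2 S2) as [d2 [dd2 [O2 W2]]].
  assert (Hrange : forall t, 0 < t < b -> dl <= psi1 t <= a /\ dl <= psi2 t <= a).
  { intros t Ht. destruct (Hlow t Ht). specialize (B1 t ltac:(lra)). specialize (B2 t ltac:(lra)).
    lra. }
  set (p := 1 / (m - 1)).
  assert (Hp : 0 < p) by (unfold p; apply Rdiv_lt_0_compat; lra).
  apply (radial_solutions_agree N ((m - 1) / m) (p * (Rpower dl (p - 1) + Rpower a (p - 1))) b a
           psi1 psi2 d1 d2 dd1 dd2 (fun t => rpow (psi1 t) p) (fun t => rpow (psi2 t) p)); try lia.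
  - apply Rlt_le, Rdiv_lt_0_compat; lra.
  - pose proof (Rpower_gt_0 dl (p - 1)). pose proof (Rpower_gt_0 a (p - 1)).
    apply Rmult_le_pos; lra.
  - destruct S1 as [HR1 [E1 [_ [_ [_ [P1 _]]]]]]. rewrite <- E1. left. apply P1. lra.
  - intros t Ht. apply O1. lra.
  - intros t Ht. apply O2. lra.
  - intros t Ht. destruct (Hrange t Ht).
    rewrite !rpow_of_pos by lra. apply Rpower_lipschitz; lra.
  - intros t Ht. destruct (Hrange t Ht). apply Rabs_le. lra.
  - apply (vanishes_at_0_le _ (fun t => (psi1 t - a) - (psi2 t - a))).
    + intros t _. right. f_equal. ring.
    + apply vanishes_at_0_minus; eapply lane_emden_sol_vanishes; eauto.
  - apply (vanishes_at_0_le _ (fun t => radial_flux N d1 t - radial_flux N d2 t)).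
    + intros t _. right. f_equal. unfold radial_flux. ring.
    + apply vanishes_at_0_minus; auto.
Qed.

Lemma lane_emden_sol_agree (a : R) (psi1 psi2 : R -> R) (R1 R2 : R) :
  lane_emden_sol N m a psi1 R1 -> lane_emden_sol N m a psi2 R2 ->
  forall r, 0 <= r < Rmin R1 R2 -> psi1 r = psi2 r.
Proof.
  intros S1 S2 r [Hr0 Hr].
  pose proof (Rmin_l R1 R2). pose proof (Rmin_r R1 R2).
  destruct (Req_dec r 0) as [->|Hr0'].
  { destruct S1 as [_ [E1 _]]. destruct S2 as [_ [E2 _]]. congruence. }
  set (b := (r + Rmin R1 R2) / 2).
  pose proof S1 as [_ [_ [_ [_ [_ [P1 [D1 _]]]]]]].
  pose proof S2 as [_ [_ [_ [_ [_ [P2 [D2 _]]]]]]].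
  apply (lane_emden_sol_agree_above a psi1 psi2 R1 R2 b (Rmin (psi1 b) (psi2 b)) S1 S2);
    try (unfold b; lra).
  - apply Rmin_pos; [apply P1|apply P2]; unfold b; lra.
  - intros t Ht. pose proof (Rmin_l (psi1 b) (psi2 b)). pose proof (Rmin_r (psi1 b) (psi2 b)).
    assert (psi1 b < psi1 t) by (apply D1; unfold b in *; lra).
    assert (psi2 b < psi2 t) by (apply D2; unfold b in *; lra). lra.
Qed.

Lemma lane_emden_sol_radius_unique (a : R) (psi1 psi2 : R -> R) (R1 R2 : R) :
  lane_emden_sol N m a psi1 R1 -> lane_emden_sol N m a psi2 R2 -> R1 = R2.
Proof.
  enough (Hlt : forall psi1 psi2 R1 R2, lane_emden_sol N m a psi1 R1 -> lane_emden_sol N m a psi2 R2 ->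
            ~ R1 < R2).
  { intros S1 S2. destruct (Rtotal_order R1 R2) as [H|[H|H]]; auto; exfalso.
    - exact (Hlt _ _ _ _ S1 S2 H).
    - exact (Hlt _ _ _ _ S2 S1 H). }
  clear psi1 psi2 R1 R2. intros psi1 psi2 R1 R2 S1 S2 H12.
  pose proof (lane_emden_sol_agree a psi1 psi2 R1 R2 S1 S2) as Ag.
  rewrite Rmin_left in Ag by lra.
  destruct S1 as [HR1 [_ [_ [Z1 [C1 _]]]]].
  destruct S2 as [_ [_ [_ [_ [_ [P2 [D2 _]]]]]]].
  assert (Hp : 0 < psi2 R1) by (apply P2; lra).
  destruct (C1 (psi2 R1) Hp) as [d [Hd Hc]].
  set (r := Rmax (R1 / 2) (R1 - d / 2)).
  assert (R1 / 2 <= r) by apply Rmax_l. assert (R1 - d / 2 <= r) by apply Rmax_r.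
  assert (r < R1) by (unfold r; apply Rmax_lub_lt; lra).
  specialize (Hc r ltac:(lra)). rewrite Z1, Rminus_0_r, Ag in Hc by lra.
  assert (psi2 R1 < psi2 r) by (apply D2; lra).
  rewrite Rabs_right in Hc by lra. lra.
Qed.

Lemma lane_emden_sol_unique (a : R) (psi1 psi2 : R -> R) (R1 R2 : R) :
  lane_emden_sol N m a psi1 R1 -> lane_emden_sol N m a psi2 R2 ->
  R1 = R2 /\ forall r, 0 <= r <= R1 -> psi1 r = psi2 r.
Proof.
  intros S1 S2. pose proof (lane_emden_sol_radius_unique a psi1 psi2 R1 R2 S1 S2) as <-.
  split; [reflexivity|]. intros r Hr. destruct (Req_dec r R1) as [->|Hne].
  - destruct S1 as [_ [_ [_ [Z1 _]]]]. destruct S2 as [_ [_ [_ [Z2 _]]]]. congruence.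
  - apply (lane_emden_sol_agree a psi1 psi2 R1 R1 S1 S2). rewrite Rmin_left; lra.
Qed.

End LaneEmdenUniqueness.

(** * Scaling *)

Definition flat_at_0 (f : R -> R) (v : R) : Prop :=
  forall eps, 0 < eps -> exists delta, 0 < delta /\
    forall r, 0 < r < delta -> Rabs ((f r - v) / r) < eps.

Definition left_continuous_at (f : R -> R) (x : R) : Prop :=
  forall eps, 0 < eps -> exists delta, 0 < delta /\
    forall r, x - delta < r < x -> Rabs (f r - f x) < eps.

Lemma flat_at_0_scale (f : R -> R) (v a l : R) : 0 < a -> 0 < l ->
  flat_at_0 f v -> flat_at_0 (fun r => a * f (l * r)) (a * v).
Proof.
  intros Ha Hl Hf eps He.
  assert (Hal : 0 < a * l) by (apply Rmult_lt_0_compat; auto).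
  destruct (Hf (eps / (a * l))) as [d [Hd Hq]]; [apply Rdiv_lt_0_compat; auto|].
  exists (d / l). split; [apply Rdiv_lt_0_compat; auto|]. intros r Hr.
  assert (Hlr : 0 < l * r < d).
  { split; [apply Rmult_lt_0_compat; lra|].
    replace d with (l * (d / l)) by (field; lra). apply Rmult_lt_compat_l; lra. }
  specialize (Hq (l * r) Hlr).
  replace ((a * f (l * r) - a * v) / r) with ((a * l) * ((f (l * r) - v) / (l * r))) by (field; lra).
  rewrite Rabs_mult, (Rabs_right (a * l)) by lra.
  replace eps with ((a * l) * (eps / (a * l))) by (field; lra).
  apply Rmult_lt_compat_l; auto.
Qed.

Lemma left_continuous_at_scale (f : R -> R) (x a l : R) : 0 < a -> 0 < l ->
  left_continuous_at f x -> left_continuous_at (fun r => a * f (l * r)) (x / l).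
Proof.
  intros Ha Hl Hf eps He.
  destruct (Hf (eps / a)) as [d [Hd Hq]]; [apply Rdiv_lt_0_compat; auto|].
  exists (d / l). split; [apply Rdiv_lt_0_compat; auto|]. intros r Hr.
  replace (l * (x / l)) with x by (field; lra).
  assert (Hlr : x - d < l * r < x).
  { replace x with (l * (x / l)) by (field; lra). replace d with (l * (d / l)) by (field; lra).
    split; [rewrite <- Rmult_minus_distr_l|]; apply Rmult_lt_compat_l; lra. }
  specialize (Hq (l * r) Hlr).
  replace (a * f (l * r) - a * f x) with (a * (f (l * r) - f x)) by ring.
  rewrite Rabs_mult, (Rabs_right a) by lra.
  replace eps with (a * (eps / a)) by (field; lra).
  apply Rmult_lt_compat_l; auto.
Qed.

Lemma derivable_pt_lim_scale (f : R -> R) (a l x D : R) :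
  derivable_pt_lim f (l * x) D -> derivable_pt_lim (fun r => a * f (l * r)) x (a * l * D).
Proof.
  intros H.
  assert (Hl : derivable_pt_lim (fun r => l * r) x l).
  { pose proof (derivable_pt_lim_scal id l x 1 (derivable_pt_lim_id x)) as H1.
    rewrite Rmult_1_r in H1. exact H1. }
  replace (a * l * D) with (a * (D * l)) by ring.
  apply (derivable_pt_lim_scal (comp f (fun r => l * r))).
  exact (derivable_pt_lim_comp (fun r => l * r) f x l D Hl H).
Qed.

(* The exponent is chosen so that [a * (l * l) = a ^ (1 / (m - 1))]. *)
Definition lane_emden_scale (m a : R) : R := Rpower a ((1 / (m - 1) - 1) / 2).

Lemma lane_emden_scale_gt_0 (m a : R) : 0 < lane_emden_scale m a.
Proof. apply Rpower_gt_0. Qed.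

Lemma lane_emden_sol_scale (N : nat) (m a : R) (phi : R -> R) (R1 : R) :
  1 < m -> 0 < a -> lane_emden_sol N m 1 phi R1 ->
  lane_emden_sol N m a (fun r => a * phi (lane_emden_scale m a * r)) (R1 / lane_emden_scale m a).
Proof.
  intros Hm Ha [HR1 [E0 [Hd0 [HZ [HC [HP [HD [dphi [ddphi Hode]]]]]]]]].
  set (l := lane_emden_scale m a).
  assert (Hl : 0 < l) by apply lane_emden_scale_gt_0.
  set (p := 1 / (m - 1)).
  assert (Hl2 : a * (l * l) = Rpower a p).
  { unfold l, lane_emden_scale. rewrite <- Rpower_plus. rewrite <- (Rpower_1 a) at 1 by auto.
    rewrite <- Rpower_plus. f_equal. unfold p. field. lra. }
  assert (Hin : forall r, 0 <= r < R1 / l -> 0 <= l * r < R1).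
  { intros r Hr. split; [apply Rmult_le_pos; lra|].
    replace R1 with (l * (R1 / l)) by (field; lra). apply Rmult_lt_compat_l; lra. }
  split; [apply Rdiv_lt_0_compat; auto|].
  split; [rewrite Rmult_0_r, E0; ring|].
  split.
  { pose proof (flat_at_0_scale phi 1 a l Ha Hl Hd0) as H. rewrite Rmult_1_r in H. exact H. }
  split; [replace (l * (R1 / l)) with R1 by (field; lra); rewrite HZ; ring|].
  split; [exact (left_continuous_at_scale phi R1 a l Ha Hl HC)|].
  split; [intros r Hr; apply Rmult_lt_0_compat; [auto|apply HP, Hin; auto]|].
  split.
  { intros r1 r2 H1 H2 H3. apply Rmult_lt_compat_l; auto.
    apply HD; [apply Rmult_lt_0_compat; auto|apply Rmult_lt_compat_l; auto|apply Hin; lra]. }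
  exists (fun r => a * l * dphi (l * r)), (fun r => a * l * l * ddphi (l * r)).
  intros r Hr. assert (Hr' : 0 < l * r < R1) by (split; [apply Rmult_lt_0_compat|apply Hin]; lra).
  destruct (Hode (l * r) Hr') as [D1 [D2 E]].
  split; [apply derivable_pt_lim_scale; auto|].
  split; [apply (derivable_pt_lim_scale dphi (a * l) l); auto|].
  rewrite rpow_mult_l by auto. fold p. fold p in E. rewrite <- Hl2.
  replace (a * l * l * ddphi (l * r) + (INR N - 1) / r * (a * l * dphi (l * r)))
    with (a * (l * l) * (ddphi (l * r) + (INR N - 1) / (l * r) * dphi (l * r))) by (field; lra).
  rewrite E. ring.
Qed.

Lemma mass_integral_scale (N : nat) (m a : R) (phi : R -> R) (R1 : R)
  (pr1 : Riemann_integrable (mass_integrand N m phi) 0 R1) :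
  (1 <= N)%nat -> 0 < a ->
  exists pr : Riemann_integrable
      (mass_integrand N m (fun r => a * phi (lane_emden_scale m a * r))) 0 (R1 / lane_emden_scale m a),
    RiemannInt pr = Rpower a (1 / (m - 1)) / lane_emden_scale m a ^ N * RiemannInt pr1.
Proof.
  intros HN Ha.
  set (l := lane_emden_scale m a).
  assert (Hl : 0 < l) by apply lane_emden_scale_gt_0.
  set (f := mass_integrand N m phi).
  set (K := Rpower a (1 / (m - 1)) / l ^ N).
  assert (Hf : ex_RInt f (l * 0 + 0) (l * (R1 / l) + 0)).
  { replace (l * 0 + 0) with 0 by ring. replace (l * (R1 / l) + 0) with R1 by (field; lra).
    apply ex_RInt_Reals_1. exact pr1. }
  assert (Eg : forall y, mass_integrand N m (fun r => a * phi (l * r)) y = scal K (scal l (f (l * y + 0)))).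
  { intros y. change (scal K (scal l (f (l * y + 0)))) with (K * (l * f (l * y + 0))).
    unfold f, mass_integrand, K. rewrite Rplus_0_r, rpow_mult_l by auto.
    replace N with (S (N - 1)) at 2 by lia. rewrite Rpow_mult_distr. simpl pow.
    field. split; [apply pow_nonzero|]; lra. }
  assert (Hg : ex_RInt (mass_integrand N m (fun r => a * phi (l * r))) 0 (R1 / l)).
  { apply (ex_RInt_ext (fun y => scal K (scal l (f (l * y + 0))))); [intros x _; symmetry; apply Eg|].
    apply (ex_RInt_scal (fun y => scal l (f (l * y + 0)))), (ex_RInt_comp_lin f l 0 0 (R1 / l) Hf). }
  exists (ex_RInt_Reals_0 _ _ _ Hg).
  rewrite <- RInt_Reals, (RInt_ext _ (fun y => scal K (scal l (f (l * y + 0))))) by (intros; apply Eg).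
  rewrite (RInt_scal (fun y => scal l (f (l * y + 0)))) by apply (ex_RInt_comp_lin f l 0 0 (R1 / l) Hf).
  change (scal K ?x) with (K * x). f_equal.
  etransitivity; [apply (RInt_comp_lin f l 0 0 (R1 / l) Hf)|].
  replace (l * 0 + 0) with 0 by ring. replace (l * (R1 / l) + 0) with R1 by (field; lra).
  apply RInt_Reals.
Qed.

(* Coquelicot states integral identities in the carrier of [R_NormedModule]; [ring] needs [R]. *)
Ltac R_eq := match goal with |- ?a = ?b => change (@eq R a b) end.

Definition continuous_everywhere (f : R -> R) : Prop := forall t, continuous f t.

Lemma ex_RInt_of_continuous (f : R -> R) (a b : R) : continuous_everywhere f -> ex_RInt f a b.
Proof. intros H. apply (ex_RInt_continuous (V := R_CompleteNormedModule)). intros; apply H. Qed.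

Lemma continuous_everywhere_const (k : R) : continuous_everywhere (fun _ => k).
Proof. intros t. apply continuous_const. Qed.

Lemma continuous_everywhere_id : continuous_everywhere (fun x => x).
Proof. intros t. apply continuous_id. Qed.

Lemma continuous_everywhere_pow (k : nat) : continuous_everywhere (fun x => x ^ k).
Proof.
  intros t. apply (ex_derive_continuous (K := R_AbsRing) (V := R_NormedModule) (fun x => x ^ k)).
  auto_derive. auto.
Qed.

Lemma continuous_everywhere_mult (f g : R -> R) :
  continuous_everywhere f -> continuous_everywhere g -> continuous_everywhere (fun x => f x * g x).
Proof. intros Hf Hg t. apply (continuous_mult f g); auto. Qed.

Lemma continuous_everywhere_minus (f g : R -> R) :
  continuous_everywhere f -> continuous_everywhere g -> continuous_everywhere (fun x => f x - g x).
Proof. intros Hf Hg t. apply (continuous_minus f g); auto. Qed.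

Lemma continuous_everywhere_comp (f g : R -> R) :
  continuous_everywhere f -> continuous_everywhere g -> continuous_everywhere (fun x => g (f x)).
Proof. intros Hf Hg t. apply (continuous_comp f g); auto. Qed.

Lemma continuous_of_eps_delta (f : R -> R) (x : R) :
  (forall eps, 0 < eps -> exists d, 0 < d /\ forall y, Rabs (y - x) < d -> Rabs (f y - f x) < eps) ->
  continuous f x.
Proof.
  intros H. apply continuity_pt_filterlim. intros eps He.
  destruct (H eps He) as [d [Hd Hy]]. exists d. split; auto. intros y [_ Hy']. apply Hy, Hy'.
Qed.

Lemma eps_delta_of_continuous (f : R -> R) (x : R) : continuous f x ->
  forall eps, 0 < eps -> exists d, 0 < d /\ forall y, Rabs (y - x) < d -> Rabs (f y - f x) < eps.
Proof.
  intros H. apply continuity_pt_filterlim in H. intros eps He.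
  destruct (H eps He) as [d [Hd Hy]]. exists d. split; auto. intros y Hyx.
  destruct (Req_dec y x) as [->|Hne]; [rewrite Rminus_diag, Rabs_R0; auto|].
  apply Hy. split; [split; [exact I|auto]|]. apply Hyx.
Qed.

Lemma continuous_of_derivable_pt_lim (f : R -> R) (x l : R) :
  derivable_pt_lim f x l -> continuous f x.
Proof.
  intros H. apply (ex_derive_continuous (K := R_AbsRing) (V := R_NormedModule)).
  exists l. apply is_derive_Reals. auto.
Qed.

Lemma derivable_pt_lim_ext_loc (f g : R -> R) (x l d : R) : 0 < d ->
  (forall y, Rabs (y - x) < d -> f y = g y) -> derivable_pt_lim f x l -> derivable_pt_lim g x l.
Proof.
  intros Hd He Hf. apply is_derive_Reals. apply is_derive_Reals in Hf.
  apply (is_derive_ext_loc f g); auto. exists (mkposreal d Hd). intros y Hy. apply He, Hy.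
Qed.

Lemma derivable_pt_lim_RInt_0 (f : R -> R) (x : R) :
  continuous_everywhere f -> derivable_pt_lim (fun r => RInt f 0 r) x (f x).
Proof.
  intros Hf. apply is_derive_Reals, (is_derive_RInt f (fun r => RInt f 0 r) 0 x); [|apply Hf].
  exists (mkposreal 1 Rlt_0_1). intros y _.
  apply (RInt_correct (V := R_CompleteNormedModule)), ex_RInt_of_continuous, Hf.
Qed.

Lemma RInt_pow_0 (k : nat) (r : R) : RInt (fun t => t ^ k) 0 r = r ^ S k / INR (S k).
Proof.
  assert (HS : INR (S k) <> 0) by (apply not_0_INR; lia).
  apply is_RInt_unique.
  replace (r ^ S k / INR (S k)) with (minus (r ^ S k / INR (S k)) (0 ^ S k / INR (S k))).
  2:{ simpl. rewrite Rmult_0_l. unfold minus, plus, opp; simpl. field. auto. }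
  apply (is_RInt_derive (fun t => t ^ S k / INR (S k))).
  - intros y _. auto_derive; auto.
    change (match k with 0%nat => 1 | S _ => INR k + 1 end) with (INR (S k)). field. auto.
  - intros x _. apply continuous_everywhere_pow.
Qed.

Lemma RInt_pow_mult_const_0 (k : nat) (K r : R) :
  RInt (fun t => t ^ k * K) 0 r = K * (r ^ S k / INR (S k)).
Proof.
  rewrite <- RInt_pow_0, <- (RInt_scal (V := R_CompleteNormedModule))
    by (apply ex_RInt_of_continuous, continuous_everywhere_pow).
  apply RInt_ext. intros; R_eq. unfold scal; simpl; unfold mult; simpl. ring.
Qed.

(** * The radial potential *)

Definition weighted_integral (N : nat) (g : R -> R) (r : R) : R :=
  RInt (fun t => t ^ (N - 1) * g t) 0 r.

(* [radial_potential N g / (N - 2)] is the solution of [(r^(N-1) v')' = r^(N-1) g] with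
   [v(0) = v'(0) = 0]:  exchanging the order of integration in
   [v(r) = int_0^r s^(1-N) int_0^s t^(N-1) g(t) dt ds] gives the kernel below. *)
Definition radial_potential (N : nat) (g : R -> R) (r : R) : R :=
  if Rlt_dec 0 r then RInt (fun t => t * g t) 0 r - weighted_integral N g r / r ^ (N - 2) else 0.

Section RadialPotential.

Variable N : nat.
Hypothesis HN : (3 <= N)%nat.

Lemma radial_potential_nonpos_radius (g : R -> R) (r : R) : r <= 0 -> radial_potential N g r = 0.
Proof. intros H. unfold radial_potential. destruct (Rlt_dec 0 r); [lra|auto]. Qed.

Let kernel (r t : R) : R := t - t ^ (N - 1) / r ^ (N - 2).

Let continuous_kernel_mult (g : R -> R) (r : R) :
  continuous_everywhere g -> continuous_everywhere (fun t => kernel r t * g t).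
Proof.
  intros Hg. apply continuous_everywhere_mult; [|auto].
  apply continuous_everywhere_minus; [apply continuous_everywhere_id|].
  apply (continuous_everywhere_mult (fun x => x ^ (N - 1)));
    [apply continuous_everywhere_pow|apply continuous_everywhere_const].
Qed.

Let radial_potential_kernel (g : R -> R) (r : R) : continuous_everywhere g -> 0 < r ->
  radial_potential N g r = RInt (fun t => kernel r t * g t) 0 r.
Proof.
  intros Hg Hr. unfold radial_potential. destruct (Rlt_dec 0 r); [|lra].
  assert (Hn : r ^ (N - 2) <> 0) by (apply pow_nonzero; lra).
  transitivity (RInt (fun t => t * g t - / r ^ (N - 2) * (t ^ (N - 1) * g t)) 0 r).
  2:{ apply RInt_ext. intros x _. R_eq. unfold kernel. field. auto. }
  rewrite (RInt_minus (V := R_CompleteNormedModule)).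
  - rewrite (RInt_scal (V := R_CompleteNormedModule)).
    + unfold weighted_integral, minus, plus, opp, scal; simpl; unfold mult; simpl. field. auto.
    + apply ex_RInt_of_continuous, continuous_everywhere_mult; [apply continuous_everywhere_pow|auto].
  - apply ex_RInt_of_continuous, continuous_everywhere_mult; [apply continuous_everywhere_id|auto].
  - apply ex_RInt_of_continuous.
    apply (continuous_everywhere_mult (fun _ => / r ^ (N - 2))); [apply continuous_everywhere_const|].
    apply continuous_everywhere_mult; [apply continuous_everywhere_pow|auto].
Qed.

Let kernel_bounds (r t : R) : 0 < r -> 0 <= t <= r -> 0 <= kernel r t <= t.
Proof.
  intros Hr Ht. unfold kernel.
  assert (E : t ^ (N - 1) / r ^ (N - 2) = t * (t / r) ^ (N - 2)).
  { replace (N - 1)%nat with (S (N - 2)) by lia. unfold Rdiv.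
    rewrite Rpow_mult_distr, pow_inv. simpl. field. apply pow_nonzero. lra. }
  rewrite E.
  assert (0 <= t / r <= 1).
  { split; [apply Rdiv_le_0_compat; lra|].
    apply (Rmult_le_reg_r r); auto. unfold Rdiv. rewrite Rmult_assoc, Rinv_l; lra. }
  assert (0 <= (t / r) ^ (N - 2)) by (apply pow_le; lra).
  assert ((t / r) ^ (N - 2) <= 1) by (rewrite <- (pow1 (N - 2)); apply pow_incr; lra).
  split; nra.
Qed.

Let radial_potential_minus (g h : R -> R) (r : R) :
  continuous_everywhere g -> continuous_everywhere h -> 0 < r ->
  radial_potential N g r - radial_potential N h r = RInt (fun t => kernel r t * (g t - h t)) 0 r.
Proof.
  intros Hg Hh Hr. rewrite !radial_potential_kernel by auto.
  rewrite <- (RInt_minus (V := R_CompleteNormedModule));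
    [| apply ex_RInt_of_continuous, continuous_kernel_mult; auto..].
  apply RInt_ext. intros; R_eq. unfold minus, plus, opp; simpl. ring.
Qed.

Lemma radial_potential_diff_bound (g h : R -> R) (r B : R) (k : nat) :
  continuous_everywhere g -> continuous_everywhere h -> 0 < r -> 0 <= B ->
  (forall t, 0 <= t <= r -> Rabs (g t - h t) <= B * t ^ k) ->
  Rabs (radial_potential N g r - radial_potential N h r) <= B * r ^ S (S k) / INR (S (S k)).
Proof.
  intros Hg Hh Hr HB Hb.
  assert (Hc : continuous_everywhere (fun t => kernel r t * (g t - h t)))
    by (apply continuous_kernel_mult, continuous_everywhere_minus; auto).
  rewrite radial_potential_minus by auto.
  eapply Rle_trans; [apply abs_RInt_le; [lra|apply ex_RInt_of_continuous; auto]|].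
  apply Rle_trans with (RInt (fun t => B * t ^ S k) 0 r).
  - apply RInt_le; [lra| | |].
    + apply ex_RInt_of_continuous. intros t. apply (continuous_comp _ Rabs); [apply Hc|].
      apply continuous_Rabs.
    + apply ex_RInt_of_continuous, continuous_everywhere_mult;
        [apply continuous_everywhere_const|apply continuous_everywhere_pow].
    + intros t Ht. pose proof (kernel_bounds r t Hr ltac:(lra)).
      specialize (Hb t ltac:(lra)). rewrite Rabs_mult, Rabs_right by lra.
      apply Rle_trans with (t * (B * t ^ k)); [apply Rmult_le_compat; try lra; apply Rabs_pos|].
      simpl. lra.
  - rewrite (RInt_ext _ (fun t => t ^ S k * B)) by (intros; R_eq; ring).
    rewrite RInt_pow_mult_const_0. unfold Rdiv. lra.
Qed.

Lemma radial_potential_le (g h : R -> R) (r : R) :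
  continuous_everywhere g -> continuous_everywhere h -> 0 < r ->
  (forall t, 0 < t < r -> g t <= h t) -> radial_potential N g r <= radial_potential N h r.
Proof.
  intros Hg Hh Hr Hle. enough (0 <= radial_potential N h r - radial_potential N g r) by lra.
  rewrite radial_potential_minus by auto. apply RInt_ge_0; [lra| |].
  - apply ex_RInt_of_continuous, continuous_kernel_mult, continuous_everywhere_minus; auto.
  - intros t Ht. pose proof (kernel_bounds r t Hr ltac:(lra)). specialize (Hle t Ht).
    apply Rmult_le_pos; lra.
Qed.

Lemma radial_potential_const (k r : R) : 0 < r ->
  radial_potential N (fun _ => k) r = k * r ^ 2 * (INR N - 2) / (2 * INR N).
Proof.
  intros Hr. unfold radial_potential, weighted_integral. destruct (Rlt_dec 0 r); [|lra].
  rewrite (RInt_ext (fun t => t * k) (fun t => t ^ 1 * k)) by (intros; R_eq; simpl; ring).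
  rewrite !RInt_pow_mult_const_0. replace (S (N - 1)) with N by lia.
  replace (r ^ N) with (r ^ 2 * r ^ (N - 2)) by (rewrite <- pow_add; f_equal; lia).
  assert (r ^ (N - 2) <> 0) by (apply pow_nonzero; lra).
  assert (INR N <> 0) by (apply not_0_INR; lia).
  replace (INR (S 1)) with 2 by (simpl; ring). field. auto.
Qed.

Lemma radial_potential_zero (r : R) : radial_potential N (fun _ => 0) r = 0.
Proof.
  destruct (Rlt_dec 0 r) as [Hr|Hr]; [|apply radial_potential_nonpos_radius; lra].
  rewrite radial_potential_const by auto. field. apply not_0_INR. lia.
Qed.

Lemma radial_potential_deriv (g : R -> R) (r : R) : continuous_everywhere g -> 0 < r ->
  derivable_pt_lim (radial_potential N g) r ((INR N - 2) * weighted_integral N g r / r ^ (N - 1)).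
Proof.
  intros Hg Hr.
  assert (exists k, N = S (S (S k))) as [k ->] by (exists (N - 3)%nat; lia).
  replace (S (S (S k)) - 1)%nat with (S (S k)) by lia.
  apply (derivable_pt_lim_ext_loc
           (fun t => RInt (fun s => s * g s) 0 t - weighted_integral (S (S (S k))) g t / t ^ S k) _ r _ r);
    auto.
  { intros y Hy. apply Rabs_lt_between in Hy. unfold radial_potential.
    destruct (Rlt_dec 0 y); [|lra]. replace (S (S (S k)) - 2)%nat with (S k) by lia. auto. }
  unfold weighted_integral. replace (S (S (S k)) - 1)%nat with (S (S k)) by lia.
  replace ((INR (S (S (S k))) - 2) * RInt (fun t => t ^ S (S k) * g t) 0 r / r ^ S (S k))
    with (r * g r - ((r ^ S (S k) * g r) * r ^ S k
                     - (INR (S k) * r ^ pred (S k)) * RInt (fun s => s ^ S (S k) * g s) 0 r) / (r ^ S k)²).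
  - apply derivable_pt_lim_minus.
    + apply (derivable_pt_lim_RInt_0 (fun s => s * g s)).
      apply continuous_everywhere_mult; [apply continuous_everywhere_id|auto].
    + apply (derivable_pt_lim_div (fun t => RInt (fun s => s ^ S (S k) * g s) 0 t) (fun t => t ^ S k)).
      * apply (derivable_pt_lim_RInt_0 (fun s => s ^ S (S k) * g s)).
        apply continuous_everywhere_mult; [apply continuous_everywhere_pow|auto].
      * apply derivable_pt_lim_pow.
      * apply pow_nonzero. lra.
  - simpl pred. unfold Rsqr. rewrite !S_INR. simpl. field. split; [apply pow_nonzero|]; lra.
Qed.

Lemma weighted_mean_deriv (g : R -> R) (r : R) : continuous_everywhere g -> 0 < r ->
  derivable_pt_lim (fun t => weighted_integral N g t / t ^ (N - 1)) r
    (g r - (INR N - 1) * weighted_integral N g r / r ^ N).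
Proof.
  intros Hg Hr.
  assert (exists k, N = S (S (S k))) as [k ->] by (exists (N - 3)%nat; lia).
  unfold weighted_integral. replace (S (S (S k)) - 1)%nat with (S (S k)) by lia.
  replace (g r - (INR (S (S (S k))) - 1) * RInt (fun t => t ^ S (S k) * g t) 0 r / r ^ S (S (S k)))
    with (((r ^ S (S k) * g r) * r ^ S (S k)
           - (INR (S (S k)) * r ^ pred (S (S k))) * RInt (fun s => s ^ S (S k) * g s) 0 r)
          / (r ^ S (S k))²).
  - apply (derivable_pt_lim_div (fun t => RInt (fun s => s ^ S (S k) * g s) 0 t) (fun t => t ^ S (S k))).
    + apply (derivable_pt_lim_RInt_0 (fun s => s ^ S (S k) * g s)).
      apply continuous_everywhere_mult; [apply continuous_everywhere_pow|auto].
    + apply derivable_pt_lim_pow.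
    + apply pow_nonzero. lra.
  - simpl pred. unfold Rsqr. rewrite !S_INR. simpl. field. split; [apply pow_nonzero|]; lra.
Qed.

Lemma radial_potential_continuous (g : R -> R) :
  continuous_everywhere g -> (forall t, Rabs (g t) <= 1) ->
  continuous_everywhere (radial_potential N g).
Proof.
  intros Hg Hb x. destruct (Rtotal_order x 0) as [Hx|[->|Hx]].
  - apply continuous_of_eps_delta. intros eps He. exists (- x). split; [lra|].
    intros y Hy. apply Rabs_lt_between in Hy.
    rewrite !radial_potential_nonpos_radius by lra. rewrite Rminus_0_r, Rabs_R0. auto.
  - apply continuous_of_eps_delta. intros eps He. exists (Rmin 1 eps). split; [apply Rmin_pos; lra|].
    intros y Hy. pose proof (Rmin_l 1 eps). pose proof (Rmin_r 1 eps).
    rewrite (radial_potential_nonpos_radius g 0), !Rminus_0_r in * by lra.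
    destruct (Rle_dec y 0) as [Hy0|Hy0].
    + rewrite radial_potential_nonpos_radius, Rabs_R0 by lra. auto.
    + assert (Hy1 : 0 < y < Rmin 1 eps) by (apply Rabs_lt_between in Hy; lra).
      pose proof (radial_potential_diff_bound g (fun _ => 0) y 1 0 Hg
                    (continuous_everywhere_const 0) ltac:(lra) ltac:(lra)) as HH.
      rewrite radial_potential_zero, Rminus_0_r in HH.
      eapply Rle_lt_trans; [apply HH|].
      * intros t _. rewrite Rminus_0_r. simpl. rewrite Rmult_1_r. auto.
      * simpl. replace (1 * (y * (y * 1)) / (1 + 1)) with (y * y / 2) by field.
        assert (y * y <= y * 1) by (apply Rmult_le_compat_l; lra). lra.
  - exact (continuous_of_derivable_pt_lim _ _ _ (radial_potential_deriv g x Hg Hx)).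
Qed.

End RadialPotential.

(** * The truncated problem *)

Lemma pow_div_fact_le_exp (y : R) (n : nat) : 0 <= y -> y ^ n / INR (fact n) <= exp y.
Proof.
  intros Hy. eapply Rle_trans; [|apply (exp_ge_taylor y n Hy)].
  assert (Hpos : forall k, 0 <= y ^ k / INR (fact k)).
  { intros k. apply Rdiv_le_0_compat; [apply pow_le; auto|apply lt_0_INR, lt_O_fact]. }
  destruct n; [simpl; lra|]. rewrite tech5.
  assert (forall k, 0 <= sum_f_R0 (fun k => y ^ k / INR (fact k)) k).
  { induction k; [apply (Hpos 0%nat)|]. rewrite tech5. specialize (Hpos (S k)). lra. }
  specialize (H n). lra.
Qed.

Definition clamp (dl u : R) : R := Rmax dl (Rmin u 1).

Lemma clamp_range (dl u : R) : dl < 1 -> dl <= clamp dl u <= 1.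
Proof. intros H. unfold clamp, Rmax, Rmin. destruct (Rle_dec u 1); destruct (Rle_dec dl _); lra. Qed.

Lemma clamp_id (dl u : R) : dl <= u <= 1 -> clamp dl u = u.
Proof. intros H. unfold clamp, Rmax, Rmin. destruct (Rle_dec u 1); destruct (Rle_dec dl _); lra. Qed.

Lemma clamp_nondecreasing (dl u v : R) : u <= v -> clamp dl u <= clamp dl v.
Proof.
  intros H. unfold clamp, Rmax, Rmin. destruct (Rle_dec u 1); destruct (Rle_dec v 1);
  repeat match goal with |- context [Rle_dec ?a ?b] => destruct (Rle_dec a b) end; lra.
Qed.

Lemma clamp_lipschitz (dl u v : R) : Rabs (clamp dl u - clamp dl v) <= Rabs (u - v).
Proof.
  unfold clamp, Rmax, Rmin. destruct (Rle_dec u 1); destruct (Rle_dec v 1);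
  repeat match goal with |- context [Rle_dec ?a ?b] => destruct (Rle_dec a b) end;
  destruct (Rle_dec u v);
  try rewrite (Rabs_left1 (u - v)) by lra; try rewrite (Rabs_right (u - v)) by lra;
  try apply Rabs_le; lra.
Qed.

(* Clamping to [[dl, 1]] makes [u ^ p] globally Lipschitz and bounded below by [dl ^ p]. *)
Definition truncated_power (p dl u : R) : R := Rpower (clamp dl u) p.

Definition truncated_power_lip (p dl : R) : R := p * (Rpower dl (p - 1) + 1).

Section TruncatedPower.

Variables (p dl : R).
Hypothesis Hp : 0 < p.
Hypothesis Hdl : 0 < dl < 1.

Lemma truncated_power_lip_ge_0 : 0 <= truncated_power_lip p dl.
Proof. unfold truncated_power_lip. pose proof (Rpower_gt_0 dl (p - 1)). apply Rmult_le_pos; lra. Qed.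

Lemma truncated_power_lipschitz (u v : R) :
  Rabs (truncated_power p dl u - truncated_power p dl v) <= truncated_power_lip p dl * Rabs (u - v).
Proof.
  unfold truncated_power, truncated_power_lip.
  pose proof (clamp_range dl u ltac:(lra)). pose proof (clamp_range dl v ltac:(lra)).
  replace (Rpower dl (p - 1) + 1) with (Rpower dl (p - 1) + Rpower 1 (p - 1)) by (rewrite Rpower_1_l; ring).
  eapply Rle_trans; [apply (Rpower_lipschitz p dl 1); lra|].
  apply Rmult_le_compat_l; [|apply clamp_lipschitz].
  rewrite Rpower_1_l. pose proof (Rpower_gt_0 dl (p - 1)). apply Rmult_le_pos; lra.
Qed.

Lemma truncated_power_range (u : R) : 0 < truncated_power p dl u <= 1.
Proof.
  unfold truncated_power. pose proof (clamp_range dl u ltac:(lra)).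
  split; [apply Rpower_gt_0|]. rewrite <- (Rpower_1_l p). apply Rle_Rpower_l; lra.
Qed.

Lemma truncated_power_ge (u : R) : Rpower dl p <= truncated_power p dl u.
Proof. unfold truncated_power. pose proof (clamp_range dl u ltac:(lra)). apply Rle_Rpower_l; lra. Qed.

Lemma truncated_power_nondecreasing (u v : R) : u <= v -> truncated_power p dl u <= truncated_power p dl v.
Proof.
  intros H. unfold truncated_power. pose proof (clamp_range dl u ltac:(lra)).
  apply Rle_Rpower_l; [lra|]. split; [lra|]. apply clamp_nondecreasing; auto.
Qed.

Lemma truncated_power_id (u : R) : dl <= u <= 1 -> truncated_power p dl u = Rpower u p.
Proof. intros H. unfold truncated_power. rewrite clamp_id; auto. Qed.

Lemma truncated_power_continuous : continuous_everywhere (truncated_power p dl).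
Proof.
  intros x. apply continuous_of_eps_delta. intros eps He.
  pose proof truncated_power_lip_ge_0 as HL. set (L := truncated_power_lip p dl) in *.
  exists (eps / (L + 1)). split; [apply Rdiv_lt_0_compat; lra|].
  intros y Hy. eapply Rle_lt_trans; [apply truncated_power_lipschitz|]. fold L.
  apply Rle_lt_trans with ((L + 1) * Rabs (y - x)); [apply Rmult_le_compat_r; [apply Rabs_pos|lra]|].
  replace eps with ((L + 1) * (eps / (L + 1))) by (field; lra). apply Rmult_lt_compat_l; lra.
Qed.

End TruncatedPower.

Lemma INR_sub_2_gt_0 (N : nat) : (3 <= N)%nat -> 0 < INR N - 2.
Proof. intros HN. apply le_INR in HN. simpl in HN. lra. Qed.

Section TruncatedProblem.

Variables (N : nat) (p c dl : R).
Hypothesis HN : (3 <= N)%nat.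
Hypothesis Hp : 0 < p.
Hypothesis Hc : 0 < c.
Hypothesis Hdl : 0 < dl < 1.

Definition picard_step (phi : R -> R) (r : R) : R :=
  1 - c / (INR N - 2) * radial_potential N (fun t => truncated_power p dl (phi t)) r.

Fixpoint picard_iterate (n : nat) : R -> R :=
  match n with
  | O => fun _ => 1
  | S n => picard_step (picard_iterate n)
  end.

Let Ha : 0 < c / (INR N - 2).
Proof. apply Rdiv_lt_0_compat; [lra|apply INR_sub_2_gt_0; auto]. Qed.

Let HL : 0 <= truncated_power_lip p dl.
Proof. apply truncated_power_lip_ge_0; auto. Qed.

Let source_continuous (phi : R -> R) :
  continuous_everywhere phi -> continuous_everywhere (fun t => truncated_power p dl (phi t)).
Proof. intros H. apply continuous_everywhere_comp; [auto|apply truncated_power_continuous; auto]. Qed.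

Lemma picard_step_nonpos_radius (phi : R -> R) (r : R) : r <= 0 -> picard_step phi r = 1.
Proof. intros Hr. unfold picard_step. rewrite radial_potential_nonpos_radius by auto. ring. Qed.

Lemma picard_iterate_nonpos_radius (n : nat) (r : R) : r <= 0 -> picard_iterate n r = 1.
Proof. intros Hr. destruct n; [reflexivity|apply picard_step_nonpos_radius; auto]. Qed.

Lemma picard_step_continuous (phi : R -> R) :
  continuous_everywhere phi -> continuous_everywhere (picard_step phi).
Proof.
  intros Hphi. unfold picard_step.
  apply continuous_everywhere_minus; [apply continuous_everywhere_const|].
  apply (continuous_everywhere_mult (fun _ => c / (INR N - 2))); [apply continuous_everywhere_const|].
  apply radial_potential_continuous; [auto|apply source_continuous; auto|].
  intros t. pose proof (truncated_power_range p dl Hp Hdl (phi t)). rewrite Rabs_right; lra.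
Qed.

Lemma picard_iterate_continuous (n : nat) : continuous_everywhere (picard_iterate n).
Proof.
  induction n; simpl; [apply continuous_everywhere_const|apply picard_step_continuous; auto].
Qed.

Lemma picard_step_near_1 (phi : R -> R) (r : R) : continuous_everywhere phi ->
  Rabs (picard_step phi r - 1) <= c / (INR N - 2) * (r ^ 2 / 2).
Proof.
  intros Hphi. destruct (Rle_dec r 0) as [Hr|Hr].
  { rewrite picard_step_nonpos_radius, Rminus_diag, Rabs_R0 by auto.
    apply Rmult_le_pos; [lra|]. pose proof (pow2_ge_0 r). lra. }
  unfold picard_step.
  replace (1 - c / (INR N - 2) * radial_potential N (fun t => truncated_power p dl (phi t)) r - 1)
    with (- (c / (INR N - 2) * (radial_potential N (fun t => truncated_power p dl (phi t)) r
                                - radial_potential N (fun _ => 0) r)))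
    by (rewrite radial_potential_zero by auto; ring).
  rewrite Rabs_Ropp, Rabs_mult, (Rabs_right (c / (INR N - 2))) by lra.
  apply Rmult_le_compat_l; [lra|].
  eapply Rle_trans; [apply (radial_potential_diff_bound N HN _ _ r 1 0);
                     auto using source_continuous, continuous_everywhere_const; try lra|].
  - intros t _. rewrite Rminus_0_r. simpl. pose proof (truncated_power_range p dl Hp Hdl (phi t)).
    rewrite Rabs_right; lra.
  - simpl. lra.
Qed.

Lemma picard_step_lipschitz (phi psi : R -> R) (r B : R) (k : nat) :
  continuous_everywhere phi -> continuous_everywhere psi -> 0 <= r -> 0 <= B ->
  (forall t, 0 <= t <= r -> Rabs (phi t - psi t) <= B * t ^ k) ->
  Rabs (picard_step phi r - picard_step psi r)
    <= c / (INR N - 2) * truncated_power_lip p dl * B * r ^ S (S k) / INR (S (S k)).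
Proof.
  intros Hphi Hpsi Hr HB Hb.
  assert (HS : 0 < INR (S (S k))) by (apply lt_0_INR; lia).
  destruct (Req_dec r 0) as [->|Hr0].
  { rewrite !picard_step_nonpos_radius, Rminus_diag, Rabs_R0 by lra. simpl. rewrite Rmult_0_l.
    unfold Rdiv. rewrite Rmult_0_r, Rmult_0_l. lra. }
  unfold picard_step.
  replace (1 - c / (INR N - 2) * radial_potential N (fun t => truncated_power p dl (phi t)) r -
           (1 - c / (INR N - 2) * radial_potential N (fun t => truncated_power p dl (psi t)) r))
    with (- (c / (INR N - 2) * (radial_potential N (fun t => truncated_power p dl (phi t)) r
                                - radial_potential N (fun t => truncated_power p dl (psi t)) r)))
    by ring.
  rewrite Rabs_Ropp, Rabs_mult, (Rabs_right (c / (INR N - 2))) by lra.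
  unfold Rdiv at 2. rewrite !Rmult_assoc. apply Rmult_le_compat_l; [lra|].
  rewrite <- !Rmult_assoc. fold (Rdiv (truncated_power_lip p dl * B * r ^ S (S k)) (INR (S (S k)))).
  apply radial_potential_diff_bound; auto using source_continuous; [lra|apply Rmult_le_pos; auto|].
  intros t Ht. eapply Rle_trans; [apply truncated_power_lipschitz; auto|].
  rewrite Rmult_assoc. apply Rmult_le_compat_l; auto.
Qed.

Lemma picard_iterate_diff (n : nat) (r : R) : 0 <= r ->
  Rabs (picard_iterate (S n) r - picard_iterate n r) <=
  c / (INR N - 2) / 2 * (c / (INR N - 2) * truncated_power_lip p dl) ^ n / INR (fact n) * r ^ (2 * n + 2).
Proof.
  set (a := c / (INR N - 2)) in *. set (L := truncated_power_lip p dl) in *.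
  revert r. induction n as [|n IH]; intros r Hr.
  - eapply Rle_trans; [apply picard_step_near_1, continuous_everywhere_const|].
    right. unfold a. simpl. field.
    pose proof (INR_sub_2_gt_0 N HN). lra.
  - set (D := a / 2 * (a * L) ^ n / INR (fact n)).
    assert (HD : 0 <= D).
    { unfold D. apply Rdiv_le_0_compat; [|apply lt_0_INR, lt_O_fact].
      apply Rmult_le_pos; [lra|]. apply pow_le, Rmult_le_pos; lra. }
    eapply Rle_trans.
    { apply (picard_step_lipschitz _ _ r D (2 * n + 2) (picard_iterate_continuous (S n))
               (picard_iterate_continuous n) Hr HD).
      intros t Ht. apply IH. lra. }
    replace (a / 2 * (a * L) ^ S n / INR (fact (S n)) * r ^ (2 * S n + 2))
      with (a * L * D * r ^ S (S (2 * n + 2)) / INR (S n)).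
    + assert (0 <= a * L * D * r ^ S (S (2 * n + 2))).
      { apply Rmult_le_pos; [|apply pow_le; lra]. apply Rmult_le_pos; auto. apply Rmult_le_pos; lra. }
      unfold Rdiv. apply Rmult_le_compat_l; auto.
      apply Rinv_le_contravar; [apply lt_0_INR; lia|apply le_INR; lia].
    + unfold D. replace (2 * S n + 2)%nat with (S (S (2 * n + 2))) by lia.
      rewrite fact_simpl, mult_INR. simpl pow.
      assert (INR (fact n) <> 0) by (apply not_0_INR, fact_neq_0).
      assert (INR (S n) <> 0) by (apply not_0_INR; lia).
      field. auto.
Qed.

(* Since [(2 x) ^ n / n! <= exp (2 x)], the bound in [picard_iterate_diff] is at most
   [picard_bound r / 2 ^ n]. *)
Definition picard_bound (r : R) : R :=
  c / (INR N - 2) / 2 * r ^ 2 * exp (2 * (c / (INR N - 2) * truncated_power_lip p dl) * r ^ 2).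

Lemma picard_bound_ge_0 (r : R) : 0 <= picard_bound r.
Proof.
  unfold picard_bound. pose proof (exp_pos (2 * (c / (INR N - 2) * truncated_power_lip p dl) * r ^ 2)).
  apply Rmult_le_pos; [|lra]. apply Rmult_le_pos; [lra|apply pow2_ge_0].
Qed.

Lemma picard_bound_le (t r : R) : Rabs t <= Rabs r -> picard_bound t <= picard_bound r.
Proof.
  intros Ht. unfold picard_bound.
  assert (Ht2 : t ^ 2 <= r ^ 2) by (rewrite <- !Rsqr_pow2; apply Rsqr_le_abs_1; auto).
  set (k := 2 * (c / (INR N - 2) * truncated_power_lip p dl)).
  assert (Hk : 0 <= k) by (unfold k; apply Rmult_le_pos; [lra|apply Rmult_le_pos; lra]).
  assert (HE : exp (k * t ^ 2) <= exp (k * r ^ 2)).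
  { assert (Hle : k * t ^ 2 <= k * r ^ 2) by (apply Rmult_le_compat_l; auto).
    destruct Hle as [Hlt|Heq]; [left; apply exp_increasing; auto|rewrite Heq; lra]. }
  apply Rmult_le_compat; try (apply Rmult_le_pos; [lra|apply pow2_ge_0]); try (left; apply exp_pos); auto.
  apply Rmult_le_compat_l; lra.
Qed.

Lemma picard_iterate_step_le (n : nat) (r : R) :
  Rabs (picard_iterate (S n) r - picard_iterate n r) <= picard_bound r / 2 ^ n.
Proof.
  assert (H2n : 0 < 2 ^ n) by (apply pow_lt; lra).
  destruct (Rle_dec r 0) as [Hr|Hr].
  { rewrite !picard_iterate_nonpos_radius, Rminus_diag, Rabs_R0 by auto.
    apply Rdiv_le_0_compat; auto using picard_bound_ge_0. }
  eapply Rle_trans; [apply picard_iterate_diff; lra|].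
  set (a := c / (INR N - 2)) in *. set (L := truncated_power_lip p dl) in *.
  set (x := a * L * r ^ 2).
  assert (Hx : 0 <= x) by (unfold x; apply Rmult_le_pos; [apply Rmult_le_pos|apply pow2_ge_0]; lra).
  pose proof (pow_div_fact_le_exp (2 * x) n ltac:(lra)) as HT.
  assert (Hf : 0 < INR (fact n)) by (apply lt_0_INR, lt_O_fact).
  replace (a / 2 * (a * L) ^ n / INR (fact n) * r ^ (2 * n + 2))
    with (a / 2 * r ^ 2 * ((2 * x) ^ n / INR (fact n)) / 2 ^ n)
    by (unfold x; rewrite !Rpow_mult_distr, pow_add, pow_mult; field; split; lra).
  unfold picard_bound. fold a L. unfold Rdiv.
  apply Rmult_le_compat_r; [left; apply Rinv_0_lt_compat; auto|].
  apply Rmult_le_compat_l; [apply Rmult_le_pos; [lra|apply pow2_ge_0]|].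
  replace (2 * (a * L) * r ^ 2) with (2 * x) by (unfold x; ring). auto.
Qed.

Lemma picard_iterate_cauchy (n k : nat) (r : R) :
  Rabs (picard_iterate (n + k) r - picard_iterate n r)
    <= 2 * picard_bound r / 2 ^ n - 2 * picard_bound r / 2 ^ (n + k).
Proof.
  induction k.
  - rewrite Nat.add_0_r, Rminus_diag, Rabs_R0. lra.
  - replace (n + S k)%nat with (S (n + k)) by lia.
    replace (picard_iterate (S (n + k)) r - picard_iterate n r)
      with ((picard_iterate (S (n + k)) r - picard_iterate (n + k) r)
            + (picard_iterate (n + k) r - picard_iterate n r)) by ring.
    eapply Rle_trans; [apply Rabs_triang|].
    pose proof (picard_iterate_step_le (n + k) r).
    assert (0 < 2 ^ (n + k)) by (apply pow_lt; lra). assert (0 < 2 ^ n) by (apply pow_lt; lra).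
    replace (2 * picard_bound r / 2 ^ n - 2 * picard_bound r / 2 ^ S (n + k))
      with (picard_bound r / 2 ^ (n + k) + (2 * picard_bound r / 2 ^ n - 2 * picard_bound r / 2 ^ (n + k)))
      by (simpl; field; lra).
    lra.
Qed.

Definition trunc_sol (r : R) : R := real (Lim_seq (fun n => picard_iterate n r)).

Lemma trunc_sol_is_lim (r : R) : is_lim_seq (fun n => picard_iterate n r) (trunc_sol r).
Proof.
  assert (Hex : ex_finite_lim_seq (fun n => picard_iterate n r)).
  { apply ex_lim_seq_cauchy_corr. intros eps.
    pose proof (picard_bound_ge_0 r).
    destruct (half_pow_small (2 * picard_bound r) (eps / 2)) as [n0 Hn0]; [destruct eps; simpl; lra|].
    exists n0. intros n k Hn Hk.
    pose proof (picard_iterate_cauchy n0 (n - n0) r) as A.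
    pose proof (picard_iterate_cauchy n0 (k - n0) r) as B.
    replace (n0 + (n - n0))%nat with n in A by lia. replace (n0 + (k - n0))%nat with k in B by lia.
    assert (0 <= 2 * picard_bound r / 2 ^ n) by (apply Rdiv_le_0_compat; [lra|apply pow_lt; lra]).
    assert (0 <= 2 * picard_bound r / 2 ^ k) by (apply Rdiv_le_0_compat; [lra|apply pow_lt; lra]).
    replace (picard_iterate n r - picard_iterate k r)
      with ((picard_iterate n r - picard_iterate n0 r) - (picard_iterate k r - picard_iterate n0 r))
      by ring.
    eapply Rle_lt_trans; [apply Rabs_triang|]. rewrite Rabs_Ropp. lra. }
  destruct Hex as [l Hl]. unfold trunc_sol. rewrite (is_lim_seq_unique _ _ Hl). exact Hl.
Qed.

Lemma trunc_sol_picard_error (n : nat) (r : R) :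
  Rabs (trunc_sol r - picard_iterate n r) <= 2 * picard_bound r / 2 ^ n.
Proof.
  assert (Hl : is_lim_seq (fun k => Rabs (picard_iterate (k + n) r - picard_iterate n r))
                 (Rabs (trunc_sol r - picard_iterate n r))).
  { apply (is_lim_seq_abs _ (trunc_sol r - picard_iterate n r)).
    apply is_lim_seq_minus'; [|apply is_lim_seq_const].
    apply (is_lim_seq_incr_n (fun k => picard_iterate k r)), trunc_sol_is_lim. }
  assert (H : Rbar_le (Rabs (trunc_sol r - picard_iterate n r)) (2 * picard_bound r / 2 ^ n)).
  { refine (is_lim_seq_le _ (fun _ => 2 * picard_bound r / 2 ^ n) _ _ _ Hl (is_lim_seq_const _)).
    intros k. rewrite Nat.add_comm. pose proof (picard_iterate_cauchy n k r).
    assert (0 <= 2 * picard_bound r / 2 ^ (n + k))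
      by (apply Rdiv_le_0_compat; [pose proof (picard_bound_ge_0 r); lra|apply pow_lt; lra]).
    lra. }
  exact H.
Qed.

Lemma trunc_sol_continuous : continuous_everywhere trunc_sol.
Proof.
  intros x. apply continuous_of_eps_delta. intros eps He.
  set (R0 := Rabs x + 1).
  destruct (half_pow_small (2 * picard_bound R0) (eps / 3)) as [n Hn]; [lra|].
  destruct (eps_delta_of_continuous _ x (picard_iterate_continuous n x) (eps / 3)) as [d [Hd Hy]]; [lra|].
  exists (Rmin d 1). split; [apply Rmin_pos; lra|]. intros y Hyx.
  pose proof (Rmin_l d 1). pose proof (Rmin_r d 1). pose proof (Rabs_pos x).
  assert (HR0 : Rabs R0 = R0) by (unfold R0; apply Rabs_right; lra).
  assert (Hy0 : Rabs y <= Rabs R0).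
  { rewrite HR0. unfold R0. replace y with (x + (y - x)) by ring.
    eapply Rle_trans; [apply Rabs_triang|]. lra. }
  assert (Hx0 : Rabs x <= Rabs R0) by (rewrite HR0; unfold R0; lra).
  assert (H2n : 0 < 2 ^ n) by (apply pow_lt; lra).
  assert (Err : forall z, Rabs z <= Rabs R0 -> Rabs (trunc_sol z - picard_iterate n z) < eps / 3).
  { intros z Hz. eapply Rle_lt_trans; [apply trunc_sol_picard_error|].
    eapply Rle_lt_trans; [|exact Hn]. unfold Rdiv.
    apply Rmult_le_compat_r; [left; apply Rinv_0_lt_compat; auto|].
    apply Rmult_le_compat_l; [lra|]. apply picard_bound_le; auto. }
  specialize (Hy y ltac:(lra)). pose proof (Err y Hy0). pose proof (Err x Hx0).
  replace (trunc_sol y - trunc_sol x) with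
    ((trunc_sol y - picard_iterate n y) + (picard_iterate n y - picard_iterate n x)
     - (trunc_sol x - picard_iterate n x)) by ring.
  eapply Rle_lt_trans; [apply Rabs_triang|]. rewrite Rabs_Ropp.
  eapply Rle_lt_trans; [apply Rplus_le_compat_r, Rabs_triang|]. lra.
Qed.

Lemma trunc_sol_fixpoint (r : R) : trunc_sol r = picard_step trunc_sol r.
Proof.
  destruct (Rle_dec r 0) as [Hr|Hr].
  { rewrite picard_step_nonpos_radius by auto. unfold trunc_sol.
    rewrite (Lim_seq_ext _ (fun _ => 1)), Lim_seq_const; [reflexivity|].
    intros n. apply picard_iterate_nonpos_radius. auto. }
  apply Rminus_diag_uniq.
  set (E := picard_bound r). set (a := c / (INR N - 2)) in *. set (L := truncated_power_lip p dl) in *.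
  apply (eq_0_of_abs_le_lim _ (fun n => (2 * E + a * L * E * r ^ 2) / 2 ^ n)); [apply is_lim_seq_half_pow|].
  intros n. assert (H2 : 0 < 2 ^ n) by (apply pow_lt; lra).
  assert (HE : 0 <= E) by apply picard_bound_ge_0.
  pose proof (trunc_sol_picard_error (S n) r) as A. fold E in A.
  assert (B : Rabs (picard_step (picard_iterate n) r - picard_step trunc_sol r)
               <= a * L * E * r ^ 2 / 2 ^ n).
  { eapply Rle_trans.
    - apply (picard_step_lipschitz _ _ r (2 * E / 2 ^ n) 0);
        auto using picard_iterate_continuous, trunc_sol_continuous; [lra|apply Rdiv_le_0_compat; lra|].
      intros t Ht. rewrite Rabs_minus_sym. simpl. rewrite Rmult_1_r.
      eapply Rle_trans; [apply trunc_sol_picard_error|]. unfold Rdiv.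
      apply Rmult_le_compat_r; [left; apply Rinv_0_lt_compat; auto|].
      apply Rmult_le_compat_l; [lra|]. apply picard_bound_le. rewrite !Rabs_right; lra.
    - right. fold a L. simpl. field. lra. }
  replace (trunc_sol r - picard_step trunc_sol r) with
    ((trunc_sol r - picard_iterate (S n) r) + (picard_step (picard_iterate n) r - picard_step trunc_sol r))
    by (simpl; ring).
  eapply Rle_trans; [apply Rabs_triang|].
  assert (2 * E / 2 ^ S n <= 2 * E / 2 ^ n).
  { simpl. unfold Rdiv. rewrite Rinv_mult.
    assert (0 <= 2 * E * / 2 ^ n) by (apply Rmult_le_pos; [lra|left; apply Rinv_0_lt_compat; auto]).
    nra. }
  unfold Rdiv in *. lra.
Qed.

End TruncatedProblem.

Lemma continuous_eq_at_right_end (f g : R -> R) (a b : R) :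
  a < b -> continuous f b -> continuous g b -> (forall x, a < x < b -> f x = g x) -> f b = g b.
Proof.
  intros Hab Hf Hg Heq. apply Rminus_diag_uniq. apply NNPP. intros Hne.
  set (e := Rabs (f b - g b) / 2).
  assert (He : 0 < e) by (unfold e; apply Rdiv_lt_0_compat; [apply Rabs_pos_lt; auto|lra]).
  destruct (eps_delta_of_continuous f b Hf e He) as [df [Hdf Ef]].
  destruct (eps_delta_of_continuous g b Hg e He) as [dg [Hdg Eg]].
  set (x := b - Rmin (b - a) (Rmin df dg) / 2).
  assert (0 < Rmin df dg) by (apply Rmin_pos; lra).
  assert (0 < Rmin (b - a) (Rmin df dg)) by (apply Rmin_pos; lra).
  pose proof (Rmin_l (b - a) (Rmin df dg)). pose proof (Rmin_r (b - a) (Rmin df dg)).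
  pose proof (Rmin_l df dg). pose proof (Rmin_r df dg).
  assert (Hx : Rabs (x - b) < Rmin df dg) by (unfold x; rewrite Rabs_left; lra).
  specialize (Ef x ltac:(lra)). specialize (Eg x ltac:(lra)).
  rewrite Heq in Ef by (unfold x; lra).
  replace (f b - g b) with (- (g x - f b) + (g x - g b)) in e by ring.
  assert (Rabs (f b - g b) <= Rabs (g x - f b) + Rabs (g x - g b)).
  { replace (f b - g b) with (- (g x - f b) + (g x - g b)) by ring.
    eapply Rle_trans; [apply Rabs_triang|]. rewrite Rabs_Ropp. lra. }
  unfold e in *. lra.
Qed.

Section TruncatedSolution.

Variables (N : nat) (p c : R).
Hypothesis HN : (3 <= N)%nat.
Hypothesis Hp : 0 < p.
Hypothesis Hc : 0 < c.

Let Ha : 0 < c / (INR N - 2).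
Proof. apply Rdiv_lt_0_compat; [lra|apply INR_sub_2_gt_0; auto]. Qed.

Section FixedTruncation.

Variable dl : R.
Hypothesis Hdl : 0 < dl < 1.

Definition trunc_source (t : R) : R := truncated_power p dl (trunc_sol N p c dl t).
Definition trunc_dsol (r : R) : R := - c * weighted_integral N trunc_source r / r ^ (N - 1).
Definition trunc_ddsol (r : R) : R :=
  - c * (trunc_source r - (INR N - 1) * weighted_integral N trunc_source r / r ^ N).

Lemma trunc_source_continuous : continuous_everywhere trunc_source.
Proof.
  apply (continuous_everywhere_comp (trunc_sol N p c dl) (truncated_power p dl));
    [apply trunc_sol_continuous|apply truncated_power_continuous]; auto.
Qed.

Lemma trunc_source_range (t : R) : 0 < trunc_source t <= 1.
Proof. apply truncated_power_range; auto. Qed.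

Lemma trunc_sol_eq (r : R) :
  trunc_sol N p c dl r = 1 - c / (INR N - 2) * radial_potential N trunc_source r.
Proof. rewrite trunc_sol_fixpoint at 1 by auto. reflexivity. Qed.

Lemma trunc_sol_nonpos_radius (r : R) : r <= 0 -> trunc_sol N p c dl r = 1.
Proof. intros Hr. rewrite trunc_sol_eq, radial_potential_nonpos_radius by auto. ring. Qed.

Lemma trunc_sol_le_1 (r : R) : trunc_sol N p c dl r <= 1.
Proof.
  rewrite trunc_sol_eq. destruct (Rle_dec r 0); [rewrite radial_potential_nonpos_radius; lra|].
  assert (0 <= radial_potential N trunc_source r).
  { rewrite <- (radial_potential_zero N HN r).
    apply radial_potential_le; auto using continuous_everywhere_const, trunc_source_continuous; [lra|].
    intros t _. pose proof (trunc_source_range t). lra. }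
  assert (0 <= c / (INR N - 2) * radial_potential N trunc_source r) by (apply Rmult_le_pos; lra). lra.
Qed.

Lemma trunc_sol_near_1 (r : R) : Rabs (trunc_sol N p c dl r - 1) <= c / (INR N - 2) * (r ^ 2 / 2).
Proof.
  rewrite trunc_sol_fixpoint by auto.
  apply picard_step_near_1; auto. apply trunc_sol_continuous; auto.
Qed.

Lemma trunc_sol_upper (r : R) : 0 < r -> trunc_sol N p c dl r <= 1 - c * Rpower dl p * r ^ 2 / (2 * INR N).
Proof.
  intros Hr. rewrite trunc_sol_eq. pose proof (INR_sub_2_gt_0 N HN).
  assert (Hle : radial_potential N (fun _ => Rpower dl p) r <= radial_potential N trunc_source r).
  { apply radial_potential_le; auto using continuous_everywhere_const, trunc_source_continuous.
    intros t _. apply truncated_power_ge; auto. }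
  rewrite radial_potential_const in Hle by auto.
  apply (Rmult_le_compat_l (c / (INR N - 2))) in Hle; [|lra].
  replace (c / (INR N - 2) * (Rpower dl p * r ^ 2 * (INR N - 2) / (2 * INR N)))
    with (c * Rpower dl p * r ^ 2 / (2 * INR N)) in Hle by (field; lra).
  lra.
Qed.

Lemma trunc_sol_solves_ode (b : R) :
  solves_radial_ode N c b (trunc_sol N p c dl) trunc_dsol trunc_ddsol trunc_source.
Proof.
  intros r [Hr _]. pose proof (INR_sub_2_gt_0 N HN). split; [|split].
  - apply (derivable_pt_lim_ext_loc (fun r => 1 - c / (INR N - 2) * radial_potential N trunc_source r)
             _ r _ 1); [lra|intros y _; symmetry; apply trunc_sol_eq|].
    replace (trunc_dsol r)
      with (0 - c / (INR N - 2) * ((INR N - 2) * weighted_integral N trunc_source r / r ^ (N - 1)))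
      by (unfold trunc_dsol; field; split; [apply pow_nonzero|]; lra).
    apply derivable_pt_lim_minus; [apply derivable_pt_lim_const|].
    apply derivable_pt_lim_scal, radial_potential_deriv; auto using trunc_source_continuous.
  - apply (derivable_pt_lim_ext_loc (fun r => - c * (weighted_integral N trunc_source r / r ^ (N - 1)))
             _ r _ 1); [lra|intros y _; unfold trunc_dsol, Rdiv; ring|].
    apply derivable_pt_lim_scal, weighted_mean_deriv; auto using trunc_source_continuous.
  - unfold trunc_ddsol, trunc_dsol.
    replace (r ^ N) with (r * r ^ (N - 1)) by (rewrite tech_pow_Rmult; f_equal; lia).
    field. split; [apply pow_nonzero|]; lra.
Qed.

Lemma weighted_integral_source_gt_0 (r : R) : 0 < r -> 0 < weighted_integral N trunc_source r.
Proof.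
  intros Hr. apply RInt_gt_0; auto.
  - intros x Hx. apply Rmult_lt_0_compat; [apply pow_lt; lra|apply trunc_source_range].
  - intros x _. apply continuous_everywhere_mult;
      [apply continuous_everywhere_pow|apply trunc_source_continuous].
Qed.

Lemma trunc_sol_decreasing (r1 r2 : R) : 0 < r1 -> r1 < r2 -> trunc_sol N p c dl r2 < trunc_sol N p c dl r1.
Proof.
  intros H1 H2.
  destruct (MVT_cor2 (trunc_sol N p c dl) trunc_dsol r1 r2 H2) as [z [Hz1 Hz2]].
  { intros z Hz. apply (trunc_sol_solves_ode (r2 + 1)). lra. }
  enough (trunc_dsol z < 0) by (assert (trunc_dsol z * (r2 - r1) < 0) by (apply Rmult_neg_pos; lra); lra).
  unfold trunc_dsol. pose proof (weighted_integral_source_gt_0 z ltac:(lra)).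
  assert (0 < z ^ (N - 1)) by (apply pow_lt; lra).
  assert (0 < c * weighted_integral N trunc_source z / z ^ (N - 1))
    by (apply Rdiv_lt_0_compat; [apply Rmult_lt_0_compat|]; lra).
  unfold Rdiv in *. lra.
Qed.

Lemma trunc_sol_vanishes : vanishes_at_0 (fun r => trunc_sol N p c dl r - 1).
Proof.
  apply (vanishes_at_0_le _ (fun t => c / (INR N - 2) / 2 * t ^ 2)); [|apply vanishes_at_0_monomial; lia].
  intros t Ht. rewrite (Rabs_right (c / (INR N - 2) / 2 * t ^ 2)).
  - eapply Rle_trans; [apply trunc_sol_near_1|]. right. field. pose proof (INR_sub_2_gt_0 N HN). lra.
  - apply Rle_ge, Rmult_le_pos; [lra|apply pow2_ge_0].
Qed.

Lemma trunc_flux_vanishes : vanishes_at_0 (radial_flux N trunc_dsol).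
Proof.
  apply (vanishes_at_0_le _ (fun t => c * t ^ N)); [|apply vanishes_at_0_monomial; lia].
  intros t Ht. unfold radial_flux, trunc_dsol.
  assert (0 < t ^ (N - 1)) by (apply pow_lt; lra).
  replace (t ^ (N - 1) * (- c * weighted_integral N trunc_source t / t ^ (N - 1)))
    with (- (c * weighted_integral N trunc_source t)) by (field; lra).
  pose proof (weighted_integral_source_gt_0 t Ht).
  rewrite Rabs_Ropp, !Rabs_right by (apply Rle_ge, Rmult_le_pos; try apply pow_le; lra).
  apply Rmult_le_compat_l; [lra|].
  apply Rle_trans with (RInt (fun s => s ^ (N - 1)) 0 t).
  - apply RInt_le; [lra| | |].
    + apply ex_RInt_of_continuous, continuous_everywhere_mult;
        [apply continuous_everywhere_pow|apply trunc_source_continuous].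
    + apply ex_RInt_of_continuous, continuous_everywhere_pow.
    + intros x Hx. pose proof (trunc_source_range x). assert (0 < x ^ (N - 1)) by (apply pow_lt; lra).
      rewrite <- (Rmult_1_r (x ^ (N - 1))) at 2. apply Rmult_le_compat_l; lra.
  - rewrite RInt_pow_0. replace (S (N - 1)) with N by lia.
    assert (1 <= INR N) by (rewrite <- INR_1; apply le_INR; lia).
    assert (0 < t ^ N) by (apply pow_lt; lra).
    unfold Rdiv. rewrite <- (Rmult_1_r (t ^ N)) at 2. apply Rmult_le_compat_l; [lra|].
    rewrite <- Rinv_1. apply Rinv_le_contravar; lra.
Qed.

Lemma hitting_radius_exists : exists r, 0 < r /\ trunc_sol N p c dl r = dl.
Proof.
  pose proof (Rpower_gt_0 dl p). pose proof (INR_sub_2_gt_0 N HN).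
  assert (HX : 0 < c * Rpower dl p) by (apply Rmult_lt_0_compat; lra).
  set (R0 := 2 * INR N / (c * Rpower dl p) + 1).
  assert (HR0 : 1 < R0) by (unfold R0; assert (0 < 2 * INR N / (c * Rpower dl p)) by
                              (apply Rdiv_lt_0_compat; lra); lra).
  assert (Hs : trunc_sol N p c dl R0 < dl).
  { pose proof (trunc_sol_upper R0 ltac:(lra)).
    assert (R0 <= R0 ^ 2) by (simpl; nra).
    assert (2 * INR N <= c * Rpower dl p * R0 ^ 2).
    { apply Rle_trans with (c * Rpower dl p * R0); [|apply Rmult_le_compat_l; lra].
      unfold R0. rewrite Rmult_plus_distr_l. field_simplify; [|lra]. nra. }
    assert (1 <= c * Rpower dl p * R0 ^ 2 / (2 * INR N)).
    { apply (Rmult_le_reg_r (2 * INR N)); [lra|]. field_simplify; lra. }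
    lra. }
  destruct (IVT_gen_consistent (trunc_sol N p c dl) 0 R0 dl) as [x [Hx1 Hx2]].
  { apply trunc_sol_continuous; auto. }
  { rewrite trunc_sol_nonpos_radius, Rmin_right, Rmax_left; lra. }
  rewrite Rmin_left, Rmax_right in Hx1 by lra.
  exists x. split; auto. destruct (Req_dec x 0) as [->|]; [|lra].
  rewrite trunc_sol_nonpos_radius in Hx2; lra.
Qed.

Variable rd : R.
Hypothesis hit : trunc_sol N p c dl rd = dl.

Lemma trunc_sol_range_before_hit (r : R) : 0 <= r <= rd -> dl <= trunc_sol N p c dl r <= 1.
Proof.
  intros Hr. split; [|apply trunc_sol_le_1].
  destruct (Req_dec r rd) as [->|Hne]; [lra|].
  destruct (Req_dec r 0) as [->|Hne0]; [rewrite trunc_sol_nonpos_radius; lra|].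
  assert (trunc_sol N p c dl rd < trunc_sol N p c dl r) by (apply trunc_sol_decreasing; lra). lra.
Qed.

Lemma trunc_source_before_hit (r : R) : 0 <= r <= rd -> trunc_source r = rpow (trunc_sol N p c dl r) p.
Proof.
  intros Hr. pose proof (trunc_sol_range_before_hit r Hr).
  unfold trunc_source. rewrite truncated_power_id, rpow_of_pos by lra. reflexivity.
Qed.

End FixedTruncation.

(* Before hitting [d1], the [d1]-truncated solution never feels the truncation, so it also solves
   the [d2]-truncated problem; uniqueness identifies the two. *)
Lemma trunc_sol_consistent (d1 d2 rd : R) : 0 < d2 <= d1 -> d1 < 1 -> 0 < rd ->
  trunc_sol N p c d1 rd = d1 -> forall r, 0 <= r <= rd -> trunc_sol N p c d2 r = trunc_sol N p c d1 r.
Proof.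
  intros Hd Hd1 Hrd Hs.
  assert (Hdl1 : 0 < d1 < 1) by lra. assert (Hdl2 : 0 < d2 < 1) by lra.
  assert (Hopen : forall r, 0 < r < rd -> trunc_sol N p c d2 r = trunc_sol N p c d1 r).
  { apply (radial_solutions_agree N c (truncated_power_lip p d2) rd (c / (INR N - 2) * rd ^ 2)
             _ _ (trunc_dsol d2) (trunc_dsol d1) (trunc_ddsol d2) (trunc_ddsol d1)
             (trunc_source d2) (trunc_source d1));
      try lia; try lra; auto using trunc_sol_solves_ode, truncated_power_lip_ge_0.
    - apply Rmult_le_pos; [lra|apply pow2_ge_0].
    - intros r Hr. pose proof (trunc_sol_range_before_hit d1 Hdl1 rd Hs r ltac:(lra)).
      unfold trunc_source at 2. rewrite (truncated_power_id p d1), <- (truncated_power_id p d2) by lra.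
      apply truncated_power_lipschitz; auto.
    - intros r Hr. pose proof (trunc_sol_near_1 d1 Hdl1 r). pose proof (trunc_sol_near_1 d2 Hdl2 r).
      assert (r ^ 2 <= rd ^ 2) by (apply pow_incr; lra).
      assert (c / (INR N - 2) * (r ^ 2 / 2) <= c / (INR N - 2) * (rd ^ 2 / 2))
        by (apply Rmult_le_compat_l; lra).
      replace (trunc_sol N p c d2 r - trunc_sol N p c d1 r)
        with ((trunc_sol N p c d2 r - 1) - (trunc_sol N p c d1 r - 1)) by ring.
      eapply Rle_trans; [apply Rabs_triang|]. rewrite Rabs_Ropp. lra.
    - apply (vanishes_at_0_le _ (fun t => (trunc_sol N p c d2 t - 1) - (trunc_sol N p c d1 t - 1))).
      + intros t _. right. f_equal. ring.
      + apply vanishes_at_0_minus; apply trunc_sol_vanishes; auto.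
    - apply (vanishes_at_0_le _
               (fun t => radial_flux N (trunc_dsol d2) t - radial_flux N (trunc_dsol d1) t)).
      + intros t _. right. f_equal. unfold radial_flux. ring.
      + apply vanishes_at_0_minus; apply trunc_flux_vanishes; auto. }
  intros r Hr. destruct (Req_dec r 0) as [->|H0]; [rewrite !trunc_sol_nonpos_radius; auto; lra|].
  destruct (Req_dec r rd) as [->|H1]; [|apply Hopen; lra].
  apply (continuous_eq_at_right_end _ _ 0 rd); auto; apply trunc_sol_continuous; auto.
Qed.

End TruncatedSolution.

(** * A priori bound on the hitting radius *)

Lemma ge_0_of_ge_neg_monomial (x K rho : R) : 0 < rho ->
  (forall s, 0 < s <= rho -> - (K * s ^ 2) <= x) -> 0 <= x.
Proof.
  intros Hrho Hx. apply Rnot_lt_le. intros Hneg.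
  destruct (vanishes_at_0_monomial K 2 ltac:(lia) (- x) ltac:(lra)) as [d [Hd Hs]].
  set (s := Rmin d rho / 2).
  assert (0 < Rmin d rho) by (apply Rmin_pos; lra).
  pose proof (Rmin_l d rho). pose proof (Rmin_r d rho).
  specialize (Hs s ltac:(unfold s; lra)). specialize (Hx s ltac:(unfold s; lra)).
  apply Rabs_lt_between in Hs. lra.
Qed.

Lemma derivable_pt_lim_neg_inv_pow (K : R) (k : nat) (s : R) : 0 < s ->
  derivable_pt_lim (fun s => - (K / s ^ S k)) s (K * INR (S k) / s ^ S (S k)).
Proof.
  intros Hs. apply is_derive_Reals. assert (Hk : s ^ k <> 0) by (apply pow_nonzero; lra).
  auto_derive.
  - apply Rmult_integral_contrapositive. split; lra.
  - change (match k with 0%nat => 1 | S _ => INR k + 1 end) with (INR (S k)).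
    change (s ^ S (S k)) with (s * (s * s ^ k)). field. lra.
Qed.

(* Once the truncated solution has dropped to [1/2] at [r0], the flux gives
   [u(rho) >~ rho^(2-N)] up to the hitting radius, while [u^(1-q)] grows at least like [rho^2].
   Both are compatible only while [rho^(2 - (N-2)(q-1))] stays bounded, and this exponent is
   positive because [p < N/(N-2)]. *)
Section HittingRadiusBound.

Variables (N : nat) (p c dl rd : R).
Hypothesis HN : (3 <= N)%nat.
Hypothesis Hp : 0 < p.
Hypothesis Hc : 0 < c.
Hypothesis Hdl : 0 < dl <= 1 / 2.
Hypothesis hit : trunc_sol N p c dl rd = dl.

Let Hdl1 : 0 < dl < 1.
Proof. lra. Qed.

Lemma trunc_dsol_le_power (q r : R) : p <= q -> 0 < r <= rd ->
  trunc_dsol N p c dl r <= - (c / INR N) * r * Rpower (trunc_sol N p c dl r) q.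
Proof.
  intros Hpq Hr.
  pose proof (trunc_sol_range_before_hit N p c HN Hp Hc dl Hdl1 rd hit r ltac:(lra)) as Hu.
  set (u := trunc_sol N p c dl) in *.
  assert (HG : trunc_source N p c dl r = Rpower (u r) p) by (apply truncated_power_id; lra).
  assert (Hq : Rpower (u r) q <= trunc_source N p c dl r)
    by (rewrite HG; apply Rpower_le_exponent_anti; lra).
  assert (HI : trunc_source N p c dl r * (r ^ N / INR N) <= weighted_integral N (trunc_source N p c dl) r).
  { unfold weighted_integral.
    replace (trunc_source N p c dl r * (r ^ N / INR N))
      with (RInt (fun t => t ^ (N - 1) * trunc_source N p c dl r) 0 r)
      by (rewrite RInt_pow_mult_const_0; replace (S (N - 1)) with N by lia; reflexivity).
    apply RInt_le; [lra| | |].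
    - apply ex_RInt_of_continuous, continuous_everywhere_mult;
        [apply continuous_everywhere_pow|apply continuous_everywhere_const].
    - apply ex_RInt_of_continuous, continuous_everywhere_mult;
        [apply continuous_everywhere_pow|apply trunc_source_continuous; auto].
    - intros x Hx. apply Rmult_le_compat_l; [apply pow_le; lra|].
      apply truncated_power_nondecreasing; auto. left. apply trunc_sol_decreasing; auto; lra. }
  assert (Hrp : 0 < r ^ (N - 1)) by (apply pow_lt; lra).
  replace (r ^ N) with (r * r ^ (N - 1)) in HI by (rewrite tech_pow_Rmult; f_equal; lia).
  pose proof (INR_sub_2_gt_0 N HN).
  unfold trunc_dsol.
  apply Rle_trans with (- (c / INR N) * r * trunc_source N p c dl r).
  - replace (- (c / INR N) * r * trunc_source N p c dl r)
      with (- c * (trunc_source N p c dl r * (r * r ^ (N - 1) / INR N)) / r ^ (N - 1)) by (field; lra).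
    unfold Rdiv. apply Rmult_le_compat_r; [left; apply Rinv_0_lt_compat; auto|].
    unfold Rdiv in HI. nra.
  - assert (0 <= c / INR N * r) by (apply Rmult_le_pos; [apply Rlt_le, Rdiv_lt_0_compat|]; lra). nra.
Qed.

Lemma trunc_sol_power_ge (q rho : R) : p <= q -> 1 < q -> 0 < rho < rd ->
  (q - 1) * c / (2 * INR N) * rho ^ 2 <= Rpower (trunc_sol N p c dl rho) (1 - q).
Proof.
  intros Hpq Hq Hrho. pose proof (INR_sub_2_gt_0 N HN).
  set (u := trunc_sol N p c dl).
  set (K := (q - 1) * c / (2 * INR N)).
  assert (HK : 0 < K) by (unfold K; apply Rdiv_lt_0_compat; [apply Rmult_lt_0_compat|]; lra).
  set (W := fun s => Rpower (u s) (1 - q) - K * s ^ 2).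
  assert (HW : forall s, 0 < s <= rho -> W s <= W rho).
  { intros s Hs.
    apply (nondecreasing_of_deriv_nonneg W
             (fun s => (1 - q) * Rpower (u s) (1 - q - 1) * trunc_dsol N p c dl s
                       - K * (INR 2 * s ^ 1)) 0 rd);
      try lra.
    - intros x Hx. pose proof (trunc_sol_range_before_hit N p c HN Hp Hc dl Hdl1 rd hit x ltac:(lra)).
      apply derivable_pt_lim_minus; [|apply derivable_pt_lim_scal, (derivable_pt_lim_pow x 2)].
      apply (derivable_pt_lim_comp u (fun y => Rpower y (1 - q))).
      + apply (trunc_sol_solves_ode N p c HN Hp Hc dl Hdl1 (rd + 1)). lra.
      + apply derivable_pt_lim_power. unfold u. lra.
    - intros x Hx. pose proof (trunc_dsol_le_power q x Hpq ltac:(lra)) as Hd. fold u in Hd.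
      replace (1 - q - 1) with (- q) by ring.
      pose proof (Rpower_gt_0 (u x) (- q)).
      assert (Hone : Rpower (u x) (- q) * Rpower (u x) q = 1).
      { pose proof (trunc_sol_range_before_hit N p c HN Hp Hc dl Hdl1 rd hit x ltac:(lra)).
        rewrite <- Rpower_plus. replace (- q + q) with 0 by ring. apply Rpower_O. unfold u. lra. }
      assert (Hk : (1 - q) * Rpower (u x) (- q) < 0) by nra.
      apply Rmult_le_compat_neg_l with (r := (1 - q) * Rpower (u x) (- q)) in Hd; [|lra].
      replace ((1 - q) * Rpower (u x) (- q) * (- (c / INR N) * x * Rpower (u x) q))
        with ((q - 1) * (c / INR N) * x * (Rpower (u x) (- q) * Rpower (u x) q)) in Hd by ring.
      rewrite Hone in Hd. unfold K. simpl.
      replace ((q - 1) * c / (2 * INR N) * ((1 + 1) * (x * 1))) with ((q - 1) * (c / INR N) * x * 1)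
        by (field; lra).
      lra. }
  enough (0 <= W rho) by (unfold W in *; fold K; lra).
  apply (ge_0_of_ge_neg_monomial _ K rho); [lra|]. intros s Hs.
  specialize (HW s Hs). unfold W in HW. pose proof (Rpower_gt_0 (u s) (1 - q)). unfold W. lra.
Qed.

Variable r0 : R.
Hypothesis Hr0 : 0 < r0.
Hypothesis half : trunc_sol N p c dl r0 = 1 / 2.

Lemma trunc_dsol_le_tail (r : R) : r0 <= r ->
  trunc_dsol N p c dl r <= - (c * Rpower (1 / 2) p * r0 ^ N / INR N) / r ^ (N - 1).
Proof.
  intros Hr. assert (Hrp : 0 < r ^ (N - 1)) by (apply pow_lt; lra).
  set (g := fun t => t ^ (N - 1) * trunc_source N p c dl t).
  assert (Hg : continuous_everywhere g).
  { apply continuous_everywhere_mult;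
      [apply continuous_everywhere_pow|apply trunc_source_continuous; auto]. }
  assert (HI : Rpower (1 / 2) p * r0 ^ N / INR N <= weighted_integral N (trunc_source N p c dl) r).
  { unfold weighted_integral. fold g.
    rewrite <- (RInt_Chasles (V := R_CompleteNormedModule) g 0 r0 r) by (apply ex_RInt_of_continuous; auto).
    change (plus ?x ?y) with (x + y).
    assert (0 <= RInt g r0 r).
    { apply RInt_ge_0; auto; [apply ex_RInt_of_continuous; auto|]. intros x Hx. unfold g.
      apply Rmult_le_pos; [apply pow_le; lra|]. left. apply trunc_source_range; auto. }
    enough (Rpower (1 / 2) p * r0 ^ N / INR N <= RInt g 0 r0) by lra.
    replace (Rpower (1 / 2) p * r0 ^ N / INR N) with (RInt (fun t => t ^ (N - 1) * Rpower (1 / 2) p) 0 r0).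
    2:{ rewrite RInt_pow_mult_const_0. replace (S (N - 1)) with N by lia. R_eq. field.
        apply not_0_INR. lia. }
    apply RInt_le; [lra| |apply ex_RInt_of_continuous; auto|].
    - apply ex_RInt_of_continuous, continuous_everywhere_mult;
        [apply continuous_everywhere_pow|apply continuous_everywhere_const].
    - intros x Hx. unfold g. apply Rmult_le_compat_l; [apply pow_le; lra|].
      unfold trunc_source. rewrite <- (truncated_power_id p dl (1 / 2)) by lra.
      apply truncated_power_nondecreasing; auto. rewrite <- half. left.
      apply trunc_sol_decreasing; auto; lra. }
  unfold trunc_dsol, Rdiv. apply Rmult_le_compat_r; [left; apply Rinv_0_lt_compat; auto|].
  assert (c * (Rpower (1 / 2) p * r0 ^ N / INR N) <= c * weighted_integral N (trunc_source N p c dl) r)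
    by (apply Rmult_le_compat_l; lra).
  unfold Rdiv in *. lra.
Qed.

Lemma trunc_sol_ge_tail (rho : R) : r0 < rho -> rho <= rd ->
  c * Rpower (1 / 2) p * r0 ^ N / INR N / (INR N - 2) * (/ rho ^ (N - 2) - / rd ^ (N - 2))
    <= trunc_sol N p c dl rho.
Proof.
  intros Hrho Hrho_rd. pose proof (INR_sub_2_gt_0 N HN).
  set (A := c * Rpower (1 / 2) p * r0 ^ N / INR N).
  set (K := A / (INR N - 2)).
  assert (exists k, N = S (S (S k))) as [k Ek] by (exists (N - 3)%nat; lia).
  assert (E2 : (N - 2)%nat = S k) by lia. assert (E1 : (N - 1)%nat = S (S k)) by lia.
  assert (HH : trunc_sol N p c dl rd + - (K / rd ^ S k) <= trunc_sol N p c dl rho + - (K / rho ^ S k)).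
  { apply (nonincreasing_of_deriv_nonpos (fun s => trunc_sol N p c dl s + - (K / s ^ S k))
             (fun s => trunc_dsol N p c dl s + K * INR (S k) / s ^ S (S k)) r0 (rd + 1)); try lra.
    - intros x Hx. apply derivable_pt_lim_plus.
      + apply (trunc_sol_solves_ode N p c HN Hp Hc dl Hdl1 (x + 1)). lra.
      + apply derivable_pt_lim_neg_inv_pow. lra.
    - intros x Hx. pose proof (trunc_dsol_le_tail x ltac:(lra)) as Hd. fold A in Hd. rewrite E1 in Hd.
      replace (K * INR (S k)) with A; [unfold Rdiv in *; lra|].
      unfold K. rewrite <- E2, minus_INR by lia. simpl (INR 2). field. lra. }
  rewrite E2. fold A K.
  replace (K * (/ rho ^ S k - / rd ^ S k)) with (K / rho ^ S k - K / rd ^ S k) by (unfold Rdiv; ring).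
  lra.
Qed.

End HittingRadiusBound.

Lemma radius_le_of_power_sandwich (rho u B K q m : R) :
  0 < rho -> 0 < B -> 0 < K -> 1 < q -> 0 < 2 - m * (q - 1) ->
  B * Rpower rho (- m) <= u -> K * rho ^ 2 <= Rpower u (1 - q) ->
  rho <= Rpower (Rpower B (1 - q) / K) (1 / (2 - m * (q - 1))).
Proof.
  intros Hrho HB HK Hq He Hlow Hup.
  set (e := 2 - m * (q - 1)) in *.
  assert (HBr : 0 < B * Rpower rho (- m)) by (apply Rmult_lt_0_compat; [auto|apply Rpower_gt_0]).
  assert (H1 : Rpower u (1 - q) <= Rpower B (1 - q) * Rpower rho (m * (q - 1))).
  { eapply Rle_trans; [apply (Rpower_le_base_anti (B * Rpower rho (- m))); lra|].
    rewrite <- Rpower_mult_distr, Rpower_mult by (auto; apply Rpower_gt_0).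
    right. f_equal. f_equal. ring. }
  assert (H2 : K * Rpower rho e <= Rpower B (1 - q)).
  { replace (Rpower rho e) with (Rpower rho 2 * Rpower rho (- (m * (q - 1))))
      by (rewrite <- Rpower_plus; f_equal; unfold e; ring).
    replace (Rpower rho 2) with (rho ^ 2) by (rewrite <- (Rpower_pow 2 rho) by auto; f_equal; simpl; ring).
    pose proof (Rpower_gt_0 rho (- (m * (q - 1)))).
    replace (Rpower B (1 - q))
      with (Rpower B (1 - q) * Rpower rho (m * (q - 1)) * Rpower rho (- (m * (q - 1))))
      by (rewrite Rmult_assoc, <- Rpower_plus, Rplus_opp_r, Rpower_O by auto; ring).
    rewrite <- Rmult_assoc. apply Rmult_le_compat_r; lra. }
  rewrite <- (Rpower_inv_exponent rho e) at 1 by auto.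
  apply Rle_Rpower_l; [apply Rlt_le, Rdiv_lt_0_compat; lra|].
  split; [apply Rpower_gt_0|]. apply (Rmult_le_reg_l K); auto.
  replace (K * (Rpower B (1 - q) / K)) with (Rpower B (1 - q)) by (field; lra). auto.
Qed.

(* Any exponent [q >= p] with [q > 1] works; the subcriticality [p < N/(N-2)] is what makes the
   resulting exponent [2 - (N-2)(q-1)] positive. *)
Definition bound_exponent (N : nat) (p : R) : R := Rmax p ((INR N - 1) / (INR N - 2)).

Lemma bound_exponent_spec (N : nat) (p : R) : (3 <= N)%nat -> p < INR N / (INR N - 2) ->
  p <= bound_exponent N p /\ 1 < bound_exponent N p /\ 0 < 2 - (INR N - 2) * (bound_exponent N p - 1).
Proof.
  intros HN Hpn. pose proof (INR_sub_2_gt_0 N HN).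
  assert (1 < (INR N - 1) / (INR N - 2)).
  { apply (Rmult_lt_reg_r (INR N - 2)); auto. unfold Rdiv. rewrite Rmult_assoc, Rinv_l; lra. }
  assert (p * (INR N - 2) < INR N).
  { apply (Rmult_lt_compat_r (INR N - 2)) in Hpn; auto. unfold Rdiv in Hpn.
    rewrite Rmult_assoc, Rinv_l in Hpn; lra. }
  unfold bound_exponent, Rmax. destruct (Rle_dec p ((INR N - 1) / (INR N - 2))).
  - split; [auto|]. split; [auto|].
    replace ((INR N - 2) * ((INR N - 1) / (INR N - 2) - 1)) with 1 by (field; lra). lra.
  - repeat split; lra.
Qed.

Definition hitting_radius_bound (N : nat) (p c r0 : R) : R :=
  let q := bound_exponent N p in
  let B := c * Rpower (1 / 2) p * r0 ^ N / INR N / (INR N - 2) / 2 in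
  let K := (q - 1) * c / (2 * INR N) in
  Rmax (2 * r0) (2 * Rpower (Rpower B (1 - q) / K) (1 / (2 - (INR N - 2) * (q - 1)))).

Lemma hitting_radius_le (N : nat) (p c dl r0 rd : R) :
  (3 <= N)%nat -> 0 < p -> p < INR N / (INR N - 2) -> 0 < c -> 0 < dl <= 1 / 2 ->
  0 < r0 -> trunc_sol N p c dl r0 = 1 / 2 -> trunc_sol N p c dl rd = dl ->
  rd <= hitting_radius_bound N p c r0.
Proof.
  intros HN Hp Hpn Hc Hdl Hr0 Hhalf Hhit. pose proof (INR_sub_2_gt_0 N HN).
  destruct (bound_exponent_spec N p HN Hpn) as [Hpq [Hq1 He]].
  unfold hitting_radius_bound. set (q := bound_exponent N p) in *.
  set (A := c * Rpower (1 / 2) p * r0 ^ N / INR N).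
  assert (HA : 0 < A).
  { unfold A. pose proof (Rpower_gt_0 (1 / 2) p). apply Rdiv_lt_0_compat; [|lra].
    apply Rmult_lt_0_compat; [apply Rmult_lt_0_compat; lra|apply pow_lt; lra]. }
  destruct (Rle_dec rd (2 * r0)) as [Hsmall|Hbig]; [eapply Rle_trans; [|apply Rmax_l]; auto|].
  eapply Rle_trans; [|apply Rmax_r].
  set (rho := rd / 2).
  assert (Hrho : r0 < rho < rd) by (unfold rho; lra).
  enough (rho <= Rpower (Rpower (A / (INR N - 2) / 2) (1 - q) / ((q - 1) * c / (2 * INR N)))
                    (1 / (2 - (INR N - 2) * (q - 1)))) by (unfold rho in *; lra).
  apply (radius_le_of_power_sandwich rho (trunc_sol N p c dl rho)); try lra.
  - apply Rdiv_lt_0_compat; [apply Rdiv_lt_0_compat|]; lra.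
  - apply Rdiv_lt_0_compat; [apply Rmult_lt_0_compat|]; lra.
  - eapply Rle_trans; [|apply (trunc_sol_ge_tail N p c dl rd HN Hp Hc Hdl Hhit r0 Hr0 Hhalf rho); lra].
    fold A. replace rd with (2 * rho) by (unfold rho; field).
    replace (INR N - 2) with (INR (N - 2)) at 2 by (rewrite minus_INR by lia; simpl; ring).
    rewrite Rpower_Ropp, Rpower_pow by lra. rewrite Rpow_mult_distr, Rinv_mult.
    assert (H2k : 2 <= 2 ^ (N - 2)).
    { replace (N - 2)%nat with (S (N - 3)) by lia. simpl.
      assert (1 <= 2 ^ (N - 3)) by (apply pow_R1_Rle; lra). lra. }
    assert (Hrp : 0 < / rho ^ (N - 2)) by (apply Rinv_0_lt_compat, pow_lt; lra).
    assert (/ 2 ^ (N - 2) <= / 2) by (apply Rinv_le_contravar; lra).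
    assert (0 < A / (INR N - 2)) by (apply Rdiv_lt_0_compat; lra).
    replace (A / (INR N - 2) / 2 * / rho ^ (N - 2))
      with (A / (INR N - 2) * (/ rho ^ (N - 2) - / 2 * / rho ^ (N - 2))).
    2:{ assert (rho ^ (N - 2) <> 0) by (apply pow_nonzero; lra). field. split; lra. }
    apply Rmult_le_compat_l; [lra|]. nra.
  - apply (trunc_sol_power_ge N p c dl rd HN Hp Hc Hdl Hhit); lra.
Qed.

(** * The solution with initial value 1 *)

Definition trunc_level (k : nat) : R := / (INR k + 2).

Lemma trunc_level_range (k : nat) : 0 < trunc_level k <= 1 / 2.
Proof.
  unfold trunc_level. pose proof (pos_INR k). split; [apply Rinv_0_lt_compat; lra|].
  replace (1 / 2) with (/ 2) by field. apply Rinv_le_contravar; lra.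
Qed.

Lemma trunc_level_le (k j : nat) : (k <= j)%nat -> trunc_level j <= trunc_level k.
Proof.
  intros H. unfold trunc_level. apply le_INR in H. pose proof (pos_INR k).
  apply Rinv_le_contravar; lra.
Qed.

Lemma trunc_level_lt (k j : nat) : (k < j)%nat -> trunc_level j < trunc_level k.
Proof.
  intros H. unfold trunc_level. apply lt_INR in H. pose proof (pos_INR k).
  apply Rinv_lt_contravar; nra.
Qed.

Lemma trunc_level_small (eps : R) : 0 < eps -> exists k, trunc_level k < eps.
Proof.
  intros He. destruct (archimed (/ eps)) as [H1 _].
  assert (Hz : (0 <= up (/ eps))%Z) by (apply le_IZR; pose proof (Rinv_0_lt_compat eps He); simpl; lra).
  exists (Z.to_nat (up (/ eps))). unfold trunc_level.
  rewrite INR_IZR_INZ, Z2Nat.id by auto. apply (IZR_le 0) in Hz.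
  rewrite <- (Rinv_inv eps) at 2. apply Rinv_lt_contravar; [|lra].
  apply Rmult_lt_0_compat; [apply Rinv_0_lt_compat; auto|]. lra.
Qed.

Lemma rpow_continuous (p : R) : 0 < p -> continuous_everywhere (fun x => rpow x p).
Proof.
  intros Hp x. destruct (Rtotal_order x 0) as [Hx|[->|Hx]].
  - apply continuous_of_eps_delta. intros eps He. exists (- x). split; [lra|].
    intros y Hy. apply Rabs_lt_between in Hy. rewrite !rpow_of_nonpos, Rminus_diag, Rabs_R0 by lra. auto.
  - apply continuous_of_eps_delta. intros eps He. exists (Rpower eps (1 / p)). split; [apply Rpower_gt_0|].
    intros y Hy. rewrite (rpow_of_nonpos 0), Rminus_0_r in * by lra.
    destruct (Rle_dec y 0) as [Hy0|Hy0]; [rewrite rpow_of_nonpos, Rabs_R0 by lra; auto|].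
    rewrite rpow_of_pos, Rabs_right by (try left; try apply Rpower_gt_0; lra).
    rewrite Rabs_right in Hy by lra.
    rewrite <- (Rpower_inv_exponent eps p) by auto. rewrite Rpower_mult.
    replace (p * (1 / p)) with ((1 / p) * p) by ring. rewrite <- Rpower_mult.
    apply Rlt_Rpower_l; [auto|]. split; lra.
  - apply (continuous_of_derivable_pt_lim _ _ (p * Rpower x (p - 1))).
    apply (derivable_pt_lim_ext_loc (fun y => Rpower y p) _ x _ x Hx).
    + intros y Hy. apply Rabs_lt_between in Hy. rewrite rpow_of_pos by lra. auto.
    + apply derivable_pt_lim_power; auto.
Qed.

Section LimitOfTruncations.

Variables (N : nat) (p c : R).
Hypothesis HN : (3 <= N)%nat.
Hypothesis Hp : 0 < p.
Hypothesis Hc : 0 < c.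

Variable rk : nat -> R.
Hypothesis rk_hits : forall k, 0 < rk k /\ trunc_sol N p c (trunc_level k) (rk k) = trunc_level k.

Let level_lt_1 (k : nat) : 0 < trunc_level k < 1.
Proof. pose proof (trunc_level_range k). lra. Qed.

Lemma trunc_sols_agree (k j : nat) (r : R) : (k <= j)%nat -> r <= rk k ->
  trunc_sol N p c (trunc_level j) r = trunc_sol N p c (trunc_level k) r.
Proof.
  intros Hkj Hr. pose proof (trunc_level_range j). pose proof (trunc_level_le k j Hkj).
  destruct (Rle_dec r 0) as [Hr0|Hr0].
  - rewrite !trunc_sol_nonpos_radius; auto.
  - destruct (rk_hits k) as [A B].
    apply (trunc_sol_consistent N p c HN Hp Hc _ _ (rk k)); try lra; auto. apply level_lt_1.
Qed.

Lemma hit_radius_increasing (k j : nat) : (k < j)%nat -> rk k < rk j.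
Proof.
  intros Hkj. pose proof (trunc_level_lt k j Hkj).
  destruct (rk_hits k) as [A B]. destruct (rk_hits j) as [C D].
  assert (E : trunc_sol N p c (trunc_level j) (rk k) = trunc_level k)
    by (rewrite (trunc_sols_agree k j) by (lia || lra); auto).
  apply Rnot_le_lt. intros Hle. destruct (Req_dec (rk j) (rk k)) as [Heq|Hne].
  - rewrite Heq in D. lra.
  - assert (trunc_sol N p c (trunc_level j) (rk k) < trunc_sol N p c (trunc_level j) (rk j))
      by (apply trunc_sol_decreasing; auto; lra).
    lra.
Qed.

Lemma hit_radius_bounded (k : nat) :
  p < INR N / (INR N - 2) -> rk k <= hitting_radius_bound N p c (rk 0%nat).
Proof.
  intros Hpn. destruct (rk_hits k) as [A B]. destruct (rk_hits 0%nat) as [C D].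
  apply (hitting_radius_le N p c (trunc_level k)); auto; [apply trunc_level_range|].
  rewrite (trunc_sols_agree 0 k) by (lia || lra). rewrite D. unfold trunc_level. simpl. field.
Qed.

Lemma hit_radius_limit : p < INR N / (INR N - 2) ->
  exists Rs, (forall k, rk k < Rs) /\ (forall r, r < Rs -> exists k, r < rk k).
Proof.
  intros Hpn.
  assert (Hg : Un_growing rk) by (intros n; left; apply hit_radius_increasing; lia).
  assert (Hub : has_ub rk).
  { exists (hitting_radius_bound N p c (rk 0%nat)). intros x [i ->]. apply hit_radius_bounded; auto. }
  destruct (growing_cv rk Hg Hub) as [l Hl].
  exists l. split.
  - intros k. pose proof (growing_ineq rk l Hg Hl (S k)). pose proof (hit_radius_increasing k (S k)).
    assert (rk k < rk (S k)) by auto. lra.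
  - intros r Hr. destruct (Hl (l - r) ltac:(lra)) as [n Hn]. exists n. specialize (Hn n (le_n _)).
    unfold Rdist in Hn. apply Rabs_lt_between in Hn. lra.
Qed.

Variable Rs : R.
Hypothesis rk_lt : forall k, rk k < Rs.
Hypothesis rk_exhaust : forall r, r < Rs -> exists k, r < rk k.

(* [Lim_seq] is only used where the sequence is eventually constant. *)
Definition truncation_limit (r : R) : R :=
  if Rlt_dec r Rs then real (Lim_seq (fun k => trunc_sol N p c (trunc_level k) r)) else 0.

Lemma truncation_limit_eq (k : nat) (r : R) : r <= rk k ->
  truncation_limit r = trunc_sol N p c (trunc_level k) r.
Proof.
  intros Hr. unfold truncation_limit. destruct (Rlt_dec r Rs) as [_|Hn]; [|specialize (rk_lt k); lra].
  rewrite <- (Lim_seq_incr_n _ k), (Lim_seq_ext _ (fun _ => trunc_sol N p c (trunc_level k) r)).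
  - rewrite Lim_seq_const. reflexivity.
  - intros n. apply trunc_sols_agree; auto. lia.
Qed.

Lemma truncation_limit_beyond (r : R) : Rs <= r -> truncation_limit r = 0.
Proof. intros H. unfold truncation_limit. destruct (Rlt_dec r Rs); [lra|auto]. Qed.

Lemma truncation_limit_ge_level (r : R) : r < Rs ->
  exists k, r < rk k /\ truncation_limit r = trunc_sol N p c (trunc_level k) r /\
            trunc_level k <= truncation_limit r.
Proof.
  intros Hr. destruct (rk_exhaust r Hr) as [k Hk]. exists k.
  rewrite (truncation_limit_eq k r) by lra. split; [auto|]. split; [auto|].
  destruct (rk_hits k) as [A B]. destruct (Rle_dec r 0) as [Hr0|Hr0].
  - rewrite trunc_sol_nonpos_radius by auto. pose proof (trunc_level_range k). lra.
  - apply (trunc_sol_range_before_hit N p c HN Hp Hc _ (level_lt_1 k) (rk k)); auto; lra.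
Qed.

Lemma truncation_limit_small_near_Rs (eps : R) : 0 < eps ->
  exists d, 0 < d /\ forall r, Rs - d < r < Rs -> 0 < truncation_limit r < eps.
Proof.
  intros He. destruct (trunc_level_small eps He) as [k Hk].
  exists (Rs - rk k). split; [specialize (rk_lt k); lra|]. intros r Hr.
  destruct (truncation_limit_ge_level r ltac:(lra)) as [j [Hj [E G]]].
  pose proof (trunc_level_range j). split; [lra|].
  assert (Hkj : (k < j)%nat).
  { destruct (le_lt_dec j k) as [Hle|Hlt]; auto. exfalso.
    destruct (le_lt_eq_dec j k Hle) as [Hlt|Heq]; [pose proof (hit_radius_increasing j k Hlt)|subst]; lra. }
  rewrite E. destruct (rk_hits k) as [A B].
  assert (trunc_sol N p c (trunc_level j) (rk k) = trunc_level k)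
    by (rewrite (trunc_sols_agree k j) by (lia || lra); auto).
  assert (trunc_sol N p c (trunc_level j) r < trunc_sol N p c (trunc_level j) (rk k))
    by (apply trunc_sol_decreasing; auto; lra).
  lra.
Qed.

Lemma truncation_limit_continuous : continuous_everywhere truncation_limit.
Proof.
  intros x. apply continuous_of_eps_delta. intros eps He.
  destruct (Rlt_dec x Rs) as [Hx|Hx].
  - destruct (rk_exhaust x Hx) as [k Hk].
    destruct (eps_delta_of_continuous _ x (trunc_sol_continuous N p c _ HN Hp Hc (level_lt_1 k) x) eps He)
      as [d [Hd Hy]].
    exists (Rmin d (rk k - x)). split; [apply Rmin_pos; lra|]. intros y Hyx.
    pose proof (Rmin_l d (rk k - x)). pose proof (Rmin_r d (rk k - x)).
    apply Rabs_lt_between in Hyx as Hyx'.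
    rewrite !(truncation_limit_eq k) by lra. apply Hy. lra.
  - destruct (Req_dec x Rs) as [->|Hne].
    + destruct (truncation_limit_small_near_Rs eps He) as [d [Hd Hl]].
      exists d. split; auto. intros y Hy. rewrite (truncation_limit_beyond Rs), Rminus_0_r by lra.
      apply Rabs_lt_between in Hy. destruct (Rlt_dec y Rs) as [Hy'|Hy'].
      * specialize (Hl y ltac:(lra)). rewrite Rabs_right; lra.
      * rewrite truncation_limit_beyond, Rabs_R0 by lra. auto.
    + exists (x - Rs). split; [lra|]. intros y Hy. apply Rabs_lt_between in Hy.
      rewrite !truncation_limit_beyond, Rminus_diag, Rabs_R0 by lra. auto.
Qed.

Definition truncation_limit_d (r : R) : R :=
  - c * weighted_integral N (fun t => rpow (truncation_limit t) p) r / r ^ (N - 1).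
Definition truncation_limit_dd (r : R) : R :=
  - c * (rpow (truncation_limit r) p
         - (INR N - 1) * weighted_integral N (fun t => rpow (truncation_limit t) p) r / r ^ N).

Lemma truncation_limit_source_eq (k : nat) (y : R) : 0 < y <= rk k ->
  weighted_integral N (fun t => rpow (truncation_limit t) p) y
    = weighted_integral N (trunc_source N p c (trunc_level k)) y /\
  rpow (truncation_limit y) p = trunc_source N p c (trunc_level k) y.
Proof.
  intros Hy. destruct (rk_hits k) as [A B].
  assert (E : forall t, 0 <= t <= rk k ->
               rpow (truncation_limit t) p = trunc_source N p c (trunc_level k) t).
  { intros t Ht. rewrite (truncation_limit_eq k) by lra.
    symmetry. apply (trunc_source_before_hit N p c HN Hp Hc _ (level_lt_1 k) (rk k)); auto. }
  split; [|apply E; lra].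
  apply RInt_ext. intros t Ht. rewrite Rmin_left, Rmax_right in Ht by lra. rewrite E by lra. reflexivity.
Qed.

Lemma truncation_limit_solves_ode :
  solves_radial_ode N c Rs truncation_limit truncation_limit_d truncation_limit_dd
    (fun r => rpow (truncation_limit r) p).
Proof.
  intros r Hr. destruct (rk_exhaust r ltac:(lra)) as [k Hk].
  set (d := Rmin r (rk k - r)).
  assert (Hd : 0 < d) by (unfold d; apply Rmin_pos; lra).
  assert (Hloc : forall y, Rabs (y - r) < d -> 0 < y <= rk k).
  { intros y Hy. pose proof (Rmin_l r (rk k - r)). pose proof (Rmin_r r (rk k - r)).
    apply Rabs_lt_between in Hy. unfold d in *. lra. }
  assert (Edp : forall y, Rabs (y - r) < d -> trunc_dsol N p c (trunc_level k) y = truncation_limit_d y).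
  { intros y Hy. unfold trunc_dsol, truncation_limit_d.
    rewrite (proj1 (truncation_limit_source_eq k y (Hloc y Hy))). reflexivity. }
  assert (Hr0 : Rabs (r - r) < d) by (rewrite Rminus_diag, Rabs_R0; auto).
  destruct (truncation_limit_source_eq k r (Hloc r Hr0)) as [E1 E2].
  assert (Edd : truncation_limit_dd r = trunc_ddsol N p c (trunc_level k) r)
    by (unfold truncation_limit_dd, trunc_ddsol; rewrite E1, E2; reflexivity).
  destruct (trunc_sol_solves_ode N p c HN Hp Hc _ (level_lt_1 k) Rs r Hr) as [D1 [D2 Eq]].
  split; [|split].
  - rewrite <- (Edp r Hr0).
    apply (derivable_pt_lim_ext_loc (trunc_sol N p c (trunc_level k)) _ r _ d Hd); auto.
    intros y Hy. symmetry. apply truncation_limit_eq. pose proof (Hloc y Hy). lra.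
  - rewrite Edd. apply (derivable_pt_lim_ext_loc (trunc_dsol N p c (trunc_level k)) _ r _ d Hd); auto.
  - rewrite Edd, <- (Edp r Hr0), E2. exact Eq.
Qed.

Lemma truncation_limit_flat_at_0 : flat_at_0 truncation_limit 1.
Proof.
  intros eps He. pose proof (INR_sub_2_gt_0 N HN).
  set (a := c / (INR N - 2)). assert (Ha : 0 < a) by (unfold a; apply Rdiv_lt_0_compat; lra).
  destruct (rk_hits 0%nat) as [A0 _].
  set (d := Rmin (rk 0%nat) (eps / (a + 1))).
  assert (d <= rk 0%nat) by apply Rmin_l. assert (Hde : d <= eps / (a + 1)) by apply Rmin_r.
  exists d. split; [apply Rmin_pos; [lra|apply Rdiv_lt_0_compat; lra]|]. intros r Hr.
  rewrite (truncation_limit_eq 0) by lra.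
  pose proof (trunc_sol_near_1 N p c HN Hp Hc _ (level_lt_1 0) r) as Hn. fold a in Hn.
  unfold Rdiv at 1. rewrite Rabs_mult, Rabs_inv, (Rabs_right r) by lra.
  apply (Rmult_lt_reg_r r); [lra|]. rewrite Rmult_assoc, Rinv_l, Rmult_1_r by lra.
  eapply Rle_lt_trans; [apply Hn|].
  replace (a * (r ^ 2 / 2)) with (r * (a * r / 2)) by (simpl; field).
  rewrite (Rmult_comm eps). apply Rmult_lt_compat_l; [lra|].
  assert (a * r < (a + 1) * (eps / (a + 1))).
  { apply Rle_lt_trans with ((a + 1) * r); [nra|]. apply Rmult_lt_compat_l; lra. }
  replace ((a + 1) * (eps / (a + 1))) with eps in * by (field; lra). lra.
Qed.

Lemma truncation_limit_left_continuous : left_continuous_at truncation_limit Rs.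
Proof.
  intros eps He. destruct (truncation_limit_small_near_Rs eps He) as [d [Hd Hl]].
  exists d. split; auto. intros r Hr. rewrite (truncation_limit_beyond Rs), Rminus_0_r by lra.
  specialize (Hl r Hr). rewrite Rabs_right; lra.
Qed.

Lemma truncation_limit_lane_emden (m : R) : p = 1 / (m - 1) -> c = (m - 1) / m ->
  lane_emden_sol N m 1 truncation_limit Rs.
Proof.
  intros Ep Ec. destruct (rk_hits 0%nat) as [A0 _]. pose proof (rk_lt 0%nat).
  split; [lra|].
  split; [rewrite (truncation_limit_eq 0), trunc_sol_nonpos_radius; auto; lra|].
  split; [apply truncation_limit_flat_at_0|].
  split; [apply truncation_limit_beyond; lra|].
  split; [apply truncation_limit_left_continuous|].
  split.
  { intros r Hr. destruct (truncation_limit_ge_level r ltac:(lra)) as [k [_ [_ G]]].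
    pose proof (trunc_level_range k). lra. }
  split.
  { intros r1 r2 Hr1 H12 Hr2. destruct (rk_exhaust r2 Hr2) as [k Hk].
    rewrite !(truncation_limit_eq k) by lra. apply trunc_sol_decreasing; auto; lra. }
  exists truncation_limit_d, truncation_limit_dd. rewrite <- Ep, <- Ec. apply truncation_limit_solves_ode.
Qed.

Lemma truncation_limit_mass_gt_0 :
  exists pr : Riemann_integrable (fun s => rpow (truncation_limit s) p * s ^ (N - 1)) 0 Rs,
    0 < RiemannInt pr.
Proof.
  assert (Hcont : continuous_everywhere (fun s => rpow (truncation_limit s) p * s ^ (N - 1))).
  { apply continuous_everywhere_mult; [|apply continuous_everywhere_pow].
    apply (continuous_everywhere_comp truncation_limit (fun x => rpow x p));
      [apply truncation_limit_continuous|apply rpow_continuous; auto]. }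
  assert (HRs : 0 < Rs) by (destruct (rk_hits 0%nat); specialize (rk_lt 0%nat); lra).
  exists (ex_RInt_Reals_0 _ _ _ (ex_RInt_of_continuous _ 0 Rs Hcont)).
  rewrite <- RInt_Reals. apply RInt_gt_0; auto.
  intros x Hx.
  destruct (truncation_limit_ge_level x ltac:(lra)) as [k [_ [_ G]]].
  pose proof (trunc_level_range k).
  apply Rmult_lt_0_compat; [rewrite rpow_of_pos by lra; apply Rpower_gt_0|apply pow_lt; lra].
Qed.

End LimitOfTruncations.

(** * Mass *)

Lemma lane_emden_exponent_bounds (N : nat) (m : R) : (3 <= N)%nat -> m > 2 - 2 / INR N ->
  1 < m /\ 1 / (m - 1) < INR N / (INR N - 2).
Proof.
  intros HN Hm. pose proof (INR_sub_2_gt_0 N HN).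
  assert (Hm1 : 1 < m).
  { enough (2 / INR N <= 2 / 3) by lra. unfold Rdiv. apply Rmult_le_compat_l; [lra|].
    apply Rinv_le_contravar; [lra|]. apply le_INR in HN. simpl in HN. lra. }
  split; [auto|].
  assert (m - 1 > (INR N - 2) / INR N)
    by (replace ((INR N - 2) / INR N) with (1 - 2 / INR N) by (field; lra); lra).
  replace (INR N / (INR N - 2)) with (1 / ((INR N - 2) / INR N)) by (field; lra).
  unfold Rdiv. apply Rmult_lt_compat_l; [lra|]. apply Rinv_lt_contravar; [|lra].
  apply Rmult_lt_0_compat; [apply Rdiv_lt_0_compat|]; lra.
Qed.

Lemma lane_emden_unit_exists (N : nat) (m : R) : (3 <= N)%nat -> m > 2 - 2 / INR N ->
  exists psi Rs, lane_emden_sol N m 1 psi Rs /\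
    exists pr : Riemann_integrable (mass_integrand N m psi) 0 Rs, 0 < RiemannInt pr.
Proof.
  intros HN Hm. destruct (lane_emden_exponent_bounds N m HN Hm) as [Hm1 Hpn].
  set (p := 1 / (m - 1)) in *. set (c := (m - 1) / m).
  assert (Hp : 0 < p) by (unfold p; apply Rdiv_lt_0_compat; lra).
  assert (Hc : 0 < c) by (unfold c; apply Rdiv_lt_0_compat; lra).
  assert (Hhit : forall k, exists r, 0 < r /\ trunc_sol N p c (trunc_level k) r = trunc_level k).
  { intros k. pose proof (trunc_level_range k). apply hitting_radius_exists; auto; lra. }
  destruct (functional_choice _ Hhit) as [rk Hrk].
  destruct (hit_radius_limit N p c HN Hp Hc rk Hrk Hpn) as [Rs [Hlt Hex]].
  exists (truncation_limit N p c Rs), Rs. split.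
  - exact (truncation_limit_lane_emden N p c HN Hp Hc rk Hrk Rs Hlt Hex m eq_refl eq_refl).
  - exact (truncation_limit_mass_gt_0 N p c HN Hp Hc rk Hrk Rs Hlt Hex).
Qed.

Lemma sphere_area_gt_0 (N : nat) : (1 <= N)%nat -> 0 < sphere_area N.
Proof.
  intros HN. replace N with (S (N - 1)) by lia. generalize (N - 1)%nat. clear N HN.
  enough (H : forall n, 0 < sphere_area (S n) /\ 0 < sphere_area (S (S n))) by (intros n; apply H).
  pose proof PI_RGT_0. induction n as [|n [IH1 IH2]]; [simpl; split; lra|].
  split; auto. change (sphere_area (S (S (S n)))) with (2 * PI / INR (S n) * sphere_area (S n)).
  apply Rmult_lt_0_compat; auto. apply Rdiv_lt_0_compat; [lra|apply lt_0_INR; lia].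
Qed.

Definition mass_exponent (N : nat) (m : R) : R := 1 / (m - 1) - INR N * (1 / (m - 1) - 1) / 2.

Lemma mass_exponent_gt_0 (N : nat) (m : R) : (3 <= N)%nat -> 1 / (m - 1) < INR N / (INR N - 2) ->
  0 < mass_exponent N m.
Proof.
  intros HN Hpn. pose proof (INR_sub_2_gt_0 N HN). unfold mass_exponent.
  apply (Rmult_lt_compat_r (INR N - 2)) in Hpn; auto.
  unfold Rdiv at 2 in Hpn. rewrite Rmult_assoc, Rinv_l in Hpn; lra.
Qed.

Section MassOfRescaledSolutions.

Variables (N : nat) (m : R) (phi : R -> R) (R1 : R).
Hypothesis HN : (3 <= N)%nat.
Hypothesis Hm : 1 < m.
Hypothesis Hphi : lane_emden_sol N m 1 phi R1.
Variable pr1 : Riemann_integrable (mass_integrand N m phi) 0 R1.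

Lemma rescaled_mass (a : R) : 0 < a ->
  exists pr : Riemann_integrable
      (mass_integrand N m (fun r => a * phi (lane_emden_scale m a * r))) 0 (R1 / lane_emden_scale m a),
    RiemannInt pr = Rpower a (mass_exponent N m) * RiemannInt pr1.
Proof.
  intros Ha. destruct (mass_integral_scale N m a phi R1 pr1 ltac:(lia) Ha) as [pr Hpr].
  exists pr. rewrite Hpr. f_equal.
  unfold lane_emden_scale, mass_exponent.
  rewrite <- Rpower_pow, Rpower_mult by apply Rpower_gt_0.
  unfold Rdiv at 1. rewrite <- Rpower_Ropp, <- Rpower_plus. f_equal. field; lra.
Qed.

Lemma mass_of_lane_emden_sol (a : R) (psi : R -> R) (Rs : R) :
  0 < a -> lane_emden_sol N m a psi Rs ->
  forall pr : Riemann_integrable (mass_integrand N m psi) 0 Rs,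
    RiemannInt pr = Rpower a (mass_exponent N m) * RiemannInt pr1.
Proof.
  intros Ha Hpsi pr.
  pose proof (lane_emden_sol_scale N m a phi R1 Hm Ha Hphi) as Hsc.
  destruct (lane_emden_sol_unique N m HN Hm a psi _ Rs _ Hpsi Hsc) as [-> Eq].
  destruct (rescaled_mass a Ha) as [pr' <-].
  apply RiemannInt_ext. intros x Hx. unfold mass_integrand. rewrite Eq; auto.
  destruct Hphi as [HR1 _]. pose proof (lane_emden_scale_gt_0 m a).
  assert (0 < R1 / lane_emden_scale m a) by (apply Rdiv_lt_0_compat; auto).
  rewrite Rmin_left, Rmax_right in Hx; lra.
Qed.

End MassOfRescaledSolutions.

Theorem mainTheorem4 (N : nat) (m : R) (HN : (3 <= N)%nat)
  (Hm : m > 2 - 2 / INR N) (M : R) (HM : M > 0) :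
  exists! alpha : R, alpha > 0 /\
    exists (psi : R -> R) (Rs : R),
      lane_emden_sol N m alpha psi Rs /\
      exists pr : Riemann_integrable (mass_integrand N m psi) 0 Rs,
        sphere_area N * RiemannInt pr = M.
Proof.
  destruct (lane_emden_exponent_bounds N m HN Hm) as [Hm1 Hpn].
  destruct (lane_emden_unit_exists N m HN Hm) as [phi [R1 [Hphi [pr1 HM1]]]].
  pose proof (mass_exponent_gt_0 N m HN Hpn) as He. set (e := mass_exponent N m) in *.
  pose proof (sphere_area_gt_0 N ltac:(lia)) as Hw.
  set (M0 := sphere_area N * RiemannInt pr1).
  assert (HM0 : 0 < M0) by (apply Rmult_lt_0_compat; auto).
  set (a0 := Rpower (M / M0) (1 / e)).
  assert (Ea0 : Rpower a0 e = M / M0).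
  { unfold a0. rewrite Rpower_mult. replace (1 / e * e) with 1 by (field; lra).
    apply Rpower_1, Rdiv_lt_0_compat; lra. }
  exists a0. split.
  - split; [apply Rpower_gt_0|].
    exists (fun r => a0 * phi (lane_emden_scale m a0 * r)), (R1 / lane_emden_scale m a0).
    split; [apply lane_emden_sol_scale; auto; apply Rpower_gt_0|].
    destruct (rescaled_mass N m phi R1 HN Hm1 pr1 a0 (Rpower_gt_0 _ _)) as [pr Hpr].
    exists pr. rewrite Hpr. fold e. rewrite Ea0. unfold M0. field. lra.
  - intros a [Ha [psi [Rs [Hpsi [pr Hpr]]]]].
    rewrite (mass_of_lane_emden_sol N m phi R1 HN Hm1 Hphi pr1 a psi Rs Ha Hpsi pr) in Hpr.
    fold e in Hpr.
    assert (Rpower a e = Rpower a0 e).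
    { rewrite Ea0. apply (Rmult_eq_reg_l M0); [|lra]. rewrite <- Hpr. unfold M0. field. lra. }
    rewrite <- (Rpower_inv_exponent a0 e), <- (Rpower_inv_exponent a e) by (auto; apply Rpower_gt_0).
    congruence.
Qed.
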